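(* Let $\alpha\in\mathbb{R}\setminus\mathbb{Q}$ and consider the $\mathbb{Z}$-action on $\mathbb{R}/\mathbb{Z}$ given by $n\cdot\theta=\theta+n\alpha$. Then this system has a symbolic almost one-to-one extension (a subshift $(X,\mathbb{Z})$ of $\{0,1\}^{\mathbb{Z}}$ with an almost one-to-one factor map onto the rotation) which is tame but not null.
   Context: A factor map $\pi$ is almost one-to-one if $\{x:\pi^{-1}(\pi(x))=\{x\}\}$ is dense. For a subshift $X\subseteq\{0,1\}^{\mathbb{Z}}$ with shift action $\sigma$, a set $J\subseteq\mathbb{Z}$ is an independence set for $(A_0,A_1)$ ($A_j\subseteq X$) if for all finite $I\subseteq J$ and $a\in\{0,1\}^I$, $\bigcap_{i\in I}\sigma^{-i}A_{a_i}\ne\emptyset$. The system is tame if there are no distinct $x_0,x_1$ all of whose neighbourhood pairs have infinite independence sets, and null if there are no distinct $x_0,x_1$ all of whose neighbourhood pairs have finite independence sets of arbitrarily large size. *)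

From Stdlib Require Import Reals ZArith List.
Open Scope R_scope.

Definition config := Z -> bool.

Definition shiftn (i : Z) (x : config) : config := fun n => x (n + i)%Z.

(* x and y agree on the window [-N, N] (basic cylinder neighbourhoods of the
   product topology). *)
Definition agree (N : Z) (x y : config) : Prop :=
  forall n : Z, (Z.abs n <= N)%Z -> x n = y n.

Definition subshift (X : config -> Prop) : Prop :=
  (exists x, X x) /\
  (forall x, (forall N, exists y, X y /\ agree N x y) -> X x) /\
  (forall x, X x -> X (shiftn 1 x)) /\
  (forall x, X x -> X (shiftn (-1) x)).

(* The circle R/Z is represented by the fundamental domain [0,1);
   the class of r is frac_part r.  Metric: distance to the nearest integer. *)
Definition circ_dist (a b : R) : R :=
  Rmin (frac_part (a - b)) (1 - frac_part (a - b)).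

Definition irrational (alpha : R) : Prop :=
  forall p q : Z, q <> 0%Z -> alpha * IZR q <> IZR p.

Definition factor_map_onto_rotation (X : config -> Prop) (alpha : R)
    (pi : config -> R) : Prop :=
  (forall x, X x -> 0 <= pi x < 1) /\
  (forall x, X x -> forall eps, eps > 0 ->
     exists N, forall y, X y -> agree N x y -> circ_dist (pi x) (pi y) < eps) /\
  (forall theta, 0 <= theta < 1 -> exists x, X x /\ pi x = theta) /\
  (forall x, X x -> pi (shiftn 1 x) = frac_part (pi x + alpha)).

(* {x : pi^{-1}(pi x) = {x}} is dense in X. *)
Definition almost_one_to_one (X : config -> Prop) (pi : config -> R) : Prop :=
  forall x, X x -> forall N, exists y, X y /\ agree N x y /\
    (forall z, X z -> pi z = pi y -> z = y).

Definition nbhd (X : config -> Prop) (x : config) (U : config -> Prop) : Prop :=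
  exists N, forall y, X y -> agree N x y -> U y.

Definition indep_set (X : config -> Prop) (A0 A1 : config -> Prop)
    (J : Z -> Prop) : Prop :=
  forall I : list Z, (forall i, In i I -> J i) ->
  forall a : Z -> bool,
    exists x, X x /\ forall i, In i I -> (if a i then A1 else A0) (shiftn i x).

Definition infinite_set (J : Z -> Prop) : Prop :=
  ~ exists l : list Z, forall i, J i -> In i l.

Definition tame (X : config -> Prop) : Prop :=
  ~ exists x0 x1, X x0 /\ X x1 /\ x0 <> x1 /\
    forall U0 U1, nbhd X x0 U0 -> nbhd X x1 U1 ->
      exists J, indep_set X U0 U1 J /\ infinite_set J.

Definition null (X : config -> Prop) : Prop :=
  ~ exists x0 x1, X x0 /\ X x1 /\ x0 <> x1 /\
    forall U0 U1, nbhd X x0 U0 -> nbhd X x1 U1 ->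
      forall n : nat, exists l : list Z,
        NoDup l /\ (n <= length l)%nat /\ indep_set X U0 U1 (fun i => In i l).

From Stdlib Require Import Reals ZArith List Lra Lia Psatz Classical ClassicalEpsilon
  FunctionalExtensionality Rtopology.
Open Scope R_scope.

(* Colour the circle [0,1) by  code q = true  iff  q = 0, or q > 1/2,
   or 0 < q <= 1/8 and floor(1/q) is even: the colour changes at 1/8, 1/2 and
   at the points 1/c, c >= 9, which accumulate at the discontinuity 0.  The
   itinerary of a phase theta is  n |-> code(theta + n alpha mod 1), and the
   subshift Xa is the closure of the set of itineraries.

   Itineraries agreeing on a long window have close phases
   (Kronecker density of the multiples of alpha), so every point of Xa has a
   unique limit phase; [phase] is continuous, onto and equivariant, and
   injective above the phases whose orbit avoids the cutting points.

   Given x0 <> x1 with infinite independence sets, realising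
   patterns by single itineraries shows that x0 and x1 have the same phase and
   differ at a time m whose phase is 0; the phases of the times k + m, k in
   the independence set, would then carry all colour patterns near 0, which
   is impossible since the colour only alternates finitely often between two
   scales ([coding_not_independent]).

   The itinerary of 0 and its copy with coordinate 0 flipped
   have arbitrarily large finite independence sets: for times k whose
   multiples k alpha are tiny and decrease fast, one shift places all of them
   in cells (1/(c+1), 1/c] of prescribed parities ([sweep]). *)

Lemma Int_part_plus_int r k : Int_part (r + IZR k) = (Int_part r + k)%Z.
Proof.
  symmetry; apply Int_part_spec. destruct (base_Int_part r) as [H1 H2].
  rewrite plus_IZR; lra.
Qed.

Lemma frac_plus_int r k : frac_part (r + IZR k) = frac_part r.
Proof. unfold frac_part. rewrite Int_part_plus_int, plus_IZR. ring. Qed.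

Lemma frac_id r : 0 <= r < 1 -> frac_part r = r.
Proof. intros H. unfold frac_part. rewrite <- (Int_part_spec r 0); simpl; lra. Qed.

Lemma frac_bounds r : 0 <= frac_part r < 1.
Proof. destruct (base_fp r); lra. Qed.

Lemma frac_decomp r : r = IZR (Int_part r) + frac_part r.
Proof. unfold frac_part; ring. Qed.

Lemma frac_frac r : frac_part (frac_part r) = frac_part r.
Proof. apply frac_id, frac_bounds. Qed.

Lemma frac_eq_int a b : frac_part a = frac_part b -> exists k, a = b + IZR k.
Proof.
  intros H. exists (Int_part a - Int_part b)%Z. rewrite minus_IZR.
  rewrite (frac_decomp a), (frac_decomp b) at 1. rewrite H. ring.
Qed.

Lemma Int_part_eq r c : IZR c <= r < IZR c + 1 -> Int_part r = c.
Proof. intros H. symmetry. apply Int_part_spec. lra. Qed.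

Lemma Int_part_mono x y : x <= y -> (Int_part x <= Int_part y)%Z.
Proof.
  intros H. destruct (base_Int_part x), (base_Int_part y).
  assert (IZR (Int_part x) < IZR (Int_part y + 1)) by (rewrite plus_IZR; lra).
  apply lt_IZR in H4. lia.
Qed.

Lemma int_small (k : Z) : Rabs (IZR k) < 1 -> k = 0%Z.
Proof.
  intros H. apply Rabs_def2 in H. destruct H.
  assert (-1 < k)%Z by (apply lt_IZR; simpl; lra).
  assert (k < 1)%Z by (apply lt_IZR; simpl; lra). lia.
Qed.

Definition near (a b e : R) : Prop := exists k : Z, Rabs (a - b - IZR k) < e.

Lemma near_shift_l a b e k : near (a + IZR k) b e <-> near a b e.
Proof.
  split; intros [j Hj].
  - exists (j - k)%Z. rewrite minus_IZR.
    replace (a - b - (IZR j - IZR k)) with (a + IZR k - b - IZR j) by ring. auto.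
  - exists (j + k)%Z. rewrite plus_IZR.
    replace (a + IZR k - b - (IZR j + IZR k)) with (a - b - IZR j) by ring. auto.
Qed.

Lemma near_refl a e : 0 < e -> near a a e.
Proof.
  intros; exists 0%Z. replace (a - a - IZR 0) with 0 by (simpl; ring). rewrite Rabs_R0; auto.
Qed.

Lemma near_sym a b e : near a b e -> near b a e.
Proof.
  intros [k Hk]. exists (- k)%Z. rewrite opp_IZR.
  replace (b - a - - IZR k) with (- (a - b - IZR k)) by ring. rewrite Rabs_Ropp; auto.
Qed.

Lemma near_trans a b c e1 e2 : near a b e1 -> near b c e2 -> near a c (e1 + e2).
Proof.
  intros [k Hk] [j Hj]. exists (k + j)%Z. rewrite plus_IZR.
  replace (a - c - (IZR k + IZR j)) with ((a - b - IZR k) + (b - c - IZR j)) by ring.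
  eapply Rle_lt_trans; [apply Rabs_triang|]. lra.
Qed.

Lemma near_shift_r a b e k : near a (b + IZR k) e <-> near a b e.
Proof.
  split; intros H; apply near_sym; apply near_sym in H;
    [apply (near_shift_l _ _ _ k) | apply near_shift_l]; auto.
Qed.

Lemma near_frac_l a b e : near (frac_part a) b e <-> near a b e.
Proof.
  rewrite <- (near_shift_l (frac_part a) b e (Int_part a)).
  replace (frac_part a + IZR (Int_part a)) with a by (unfold frac_part; ring). tauto.
Qed.

Lemma near_frac_r a b e : near a (frac_part b) e <-> near a b e.
Proof.
  rewrite <- (near_shift_r a (frac_part b) e (Int_part b)).
  replace (frac_part b + IZR (Int_part b)) with b by (unfold frac_part; ring). tauto.
Qed.

Lemma near_mono a b e1 e2 : e1 <= e2 -> near a b e1 -> near a b e2.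
Proof. intros H [k Hk]; exists k; lra. Qed.

Lemma near_add a b c e : near a b e -> near (a + c) (b + c) e.
Proof.
  intros [k Hk]; exists k. replace (a + c - (b + c) - IZR k) with (a - b - IZR k) by ring. auto.
Qed.

Lemma near_sub2 a b c d e1 e2 : near a b e1 -> near c d e2 -> near (a - c) (b - d) (e1 + e2).
Proof.
  intros [k Hk] [j Hj]. exists (k - j)%Z. rewrite minus_IZR.
  replace (a - c - (b - d) - (IZR k - IZR j)) with ((a - b - IZR k) - (c - d - IZR j)) by ring.
  eapply Rle_lt_trans; [apply Rabs_triang|]. rewrite Rabs_Ropp. lra.
Qed.

Lemma near_dec a b e : near a b e -> exists d K, Rabs d < e /\ a = b + d + IZR K.
Proof. intros [k Hk]. exists (a - b - IZR k), k. split; auto. ring. Qed.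

Lemma near_circ a b e : near a b e -> circ_dist a b < e.
Proof.
  intros [k Hk]. unfold circ_dist.
  set (d := a - b - IZR k) in *.
  replace (a - b) with (d + IZR k) by (unfold d; ring). rewrite frac_plus_int.
  unfold frac_part. destruct (base_Int_part d) as [B1 B2].
  destruct (Rle_dec 0 d) as [Hd|Hd].
  - rewrite Rabs_pos_eq in Hk by lra.
    assert (0 <= IZR (Int_part d)).
    { assert (IZR (-1) < IZR (Int_part d)) by (simpl; lra).
      apply lt_IZR in H. apply IZR_le. lia. }
    eapply Rle_lt_trans; [apply Rmin_l|]. lra.
  - rewrite Rabs_left in Hk by lra.
    assert (IZR (Int_part d) <= IZR (-1)).
    { assert (IZR (Int_part d) < IZR 0) by (simpl; lra).
      apply lt_IZR in H. apply IZR_le. lia. }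
    simpl in H. eapply Rle_lt_trans; [apply Rmin_r|]. lra.
Qed.

Lemma near_all_eq a b : (forall e, e > 0 -> near a b e) -> frac_part a = frac_part b.
Proof.
  intros H. pose proof (frac_bounds (a - b)) as Hb.
  assert (Hz : frac_part (a - b) = 0).
  { apply NNPP; intros Hnz.
    assert (Hpos : 0 < circ_dist a b) by (unfold circ_dist, Rmin; destruct Rle_dec; lra).
    pose proof (near_circ _ _ _ (H _ Hpos)). lra. }
  destruct (fp_nat _ Hz) as [c Hc].
  replace a with (b + IZR c) by lra. apply frac_plus_int.
Qed.

Lemma near_interval a P e : near a P e -> 0 <= P - e -> P + e <= 1 ->
  P - e < frac_part a < P + e.
Proof.
  intros [k Hk] H1 H2. apply Rabs_def2 in Hk.
  replace a with ((a - IZR k) + IZR k) by ring. rewrite frac_plus_int, frac_id; lra.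
Qed.

Lemma irr_int alpha : irrational alpha -> forall k K, IZR k * alpha = IZR K -> k = 0%Z.
Proof.
  intros Hi k K H. destruct (Z.eq_dec k 0) as [|Hk]; auto. exfalso.
  apply (Hi K k Hk). rewrite Rmult_comm; auto.
Qed.

Lemma irr_rat alpha : irrational alpha -> forall k u v K, v <> 0%Z ->
  IZR k * alpha = IZR u / IZR v + IZR K -> k = 0%Z.
Proof.
  intros Hi k u v K Hv H.
  assert (Hv' : IZR v <> 0) by (apply not_0_IZR; auto).
  assert (IZR (k * v) * alpha = IZR (u + K * v)).
  { rewrite mult_IZR, plus_IZR, mult_IZR.
    replace (IZR k * IZR v * alpha) with ((IZR k * alpha) * IZR v) by ring. rewrite H.
    field; auto. }
  apply irr_int in H0; auto. lia.
Qed.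

(* The reciprocal of an integer is rational (with / 0 = 0). *)
Lemma inv_int_rational (c : Z) : exists u v : Z, v <> 0%Z /\ / IZR c = IZR u / IZR v.
Proof.
  destruct (Z.eq_dec c 0) as [->|Hc].
  - exists 0%Z, 1%Z. split; [lia|]. simpl. rewrite Rinv_0. field.
  - exists 1%Z, c. split; auto. simpl. field. apply not_0_IZR; auto.
Qed.

Lemma frac_mult_inj alpha : irrational alpha ->
  forall k l, frac_part (IZR k * alpha) = frac_part (IZR l * alpha) -> k = l.
Proof.
  intros Hi k l E. destruct (frac_eq_int _ _ E) as [K HK].
  assert (IZR (k - l) * alpha = IZR K) by (rewrite minus_IZR; lra).
  apply (irr_int alpha Hi) in H. lia.
Qed.

Lemma frac_mult_reciprocals alpha : irrational alpha -> forall k l c1 c2,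
  frac_part (IZR k * alpha) - frac_part (IZR l * alpha) = / IZR c1 - / IZR c2 -> k = l.
Proof.
  intros Hi k l c1 c2 E.
  destruct (inv_int_rational c1) as [u1 [v1 [Hv1 E1]]].
  destruct (inv_int_rational c2) as [u2 [v2 [Hv2 E2]]].
  assert (Hv1' : IZR v1 <> 0) by (apply not_0_IZR; auto).
  assert (Hv2' : IZR v2 <> 0) by (apply not_0_IZR; auto).
  assert (IZR (k - l) * alpha = IZR (u1 * v2 - u2 * v1) / IZR (v1 * v2) +
            IZR (Int_part (IZR k * alpha) - Int_part (IZR l * alpha))).
  { assert (HF : IZR (u1 * v2 - u2 * v1) / IZR (v1 * v2) = / IZR c1 - / IZR c2)
      by (rewrite minus_IZR, !mult_IZR, E1, E2; field; auto).
    rewrite HF, <- E, !minus_IZR. unfold frac_part. ring. }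
  apply irr_rat in H; auto; lia.
Qed.

Lemma injective_accumulation (u : nat -> R) :
  (forall n, 0 <= u n <= 1) -> (forall n n', u n = u n' -> n = n') ->
  exists l, forall eta, eta > 0 -> exists n, 0 < Rabs (u n - l) < eta.
Proof.
  intros Hbd Hinj.
  destruct (Bolzano_Weierstrass u (fun y => 0 <= y <= 1) (compact_P3 0 1) Hbd) as [l Hl].
  exists l. intros eta Heta.
  assert (HN : exists N, forall n, (N <= n)%nat -> u n <> l).
  { destruct (classic (exists n0, u n0 = l)) as [[n0 Hn0]|Hno].
    - exists (S n0). intros n Hn E. rewrite <- Hn0 in E. apply Hinj in E. lia.
    - exists 0%nat. intros n _ E. apply Hno; eauto. }
  destruct HN as [N HN].
  destruct (Hl (fun y => Rabs (y - l) < eta) N) as [p [Hp Vp]].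
  { exists (mkposreal eta Heta). intros y Hy. exact Hy. }
  exists p. split; auto. apply Rabs_pos_lt. specialize (HN p Hp). lra.
Qed.

Lemma density_small alpha : irrational alpha -> forall eps, eps > 0 ->
  exists n m : Z, 0 < IZR n * alpha + IZR m < eps.
Proof.
  intros Hi eps Heps.
  set (u := fun n : nat => frac_part (IZR (Z.of_nat n) * alpha)).
  destruct (injective_accumulation u) as [l Hl].
  { intros n. pose proof (frac_bounds (IZR (Z.of_nat n) * alpha)). unfold u. lra. }
  { intros n n' E. apply (frac_mult_inj alpha Hi) in E. lia. }
  destruct (Hl (eps / 2) ltac:(lra)) as [n1 Hn1].
  destruct (Hl (Rabs (u n1 - l)) ltac:(lra)) as [n2 Hn2].
  set (d := u n1 - u n2).
  assert (Hd : 0 < Rabs d < eps).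
  { assert (u n1 <> u n2) by (intros E; rewrite E in Hn2; lra).
    split; [apply Rabs_pos_lt; unfold d; lra|].
    unfold d. replace (u n1 - u n2) with ((u n1 - l) - (u n2 - l)) by ring.
    eapply Rle_lt_trans; [apply Rabs_triang|]. rewrite Rabs_Ropp. lra. }
  set (n := (Z.of_nat n1 - Z.of_nat n2)%Z).
  set (m := (Int_part (IZR (Z.of_nat n2) * alpha) - Int_part (IZR (Z.of_nat n1) * alpha))%Z).
  assert (Ed : d = IZR n * alpha + IZR m) by (unfold d, u, frac_part, n, m; rewrite !minus_IZR; ring).
  destruct (Rle_dec 0 d) as [Hpos|Hneg].
  - rewrite Rabs_pos_eq in Hd by lra. rewrite Ed in Hd. eauto.
  - rewrite Rabs_left in Hd by lra. rewrite Ed in Hd.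
    exists (- n)%Z, (- m)%Z. rewrite !opp_IZR. lra.
Qed.

Lemma uniform_density alpha : irrational alpha -> forall eps, eps > 0 ->
  exists N : nat, forall p, exists n : Z, (Z.abs n <= Z.of_nat N)%Z /\ near (IZR n * alpha) p eps.
Proof.
  intros Hi eps Heps.
  destruct (density_small alpha Hi eps Heps) as [n0 [m0 [H1 H2]]].
  set (h := IZR n0 * alpha + IZR m0) in *.
  set (K := Z.to_nat (up (1 / h))).
  exists (K * Z.to_nat (Z.abs n0))%nat. intros p.
  pose proof (frac_bounds p) as Fp.
  set (j := Int_part (frac_part p / h)).
  destruct (base_Int_part (frac_part p / h)) as [B1 B2]. fold j in B1, B2.
  assert (Hjh : IZR j * h <= frac_part p < IZR j * h + h).
  { assert (IZR j * h <= frac_part p / h * h) by (apply Rmult_le_compat_r; lra).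
    assert (frac_part p / h * h < (IZR j + 1) * h) by (apply Rmult_lt_compat_r; lra).
    replace (frac_part p / h * h) with (frac_part p) in * by (field; lra). lra. }
  assert (Hj0 : (0 <= j)%Z).
  { assert (IZR (-1) < IZR j) by (simpl; nra). apply lt_IZR in H. lia. }
  assert (HjK : (j <= Z.of_nat K)%Z).
  { unfold K. destruct (archimed (1 / h)) as [A1 A2].
    assert (frac_part p / h < 1 / h).
    { unfold Rdiv. apply Rmult_lt_compat_r; [apply Rinv_0_lt_compat|]; lra. }
    assert (IZR j < IZR (up (1/h))) by lra. apply lt_IZR in H0.
    rewrite Z2Nat.id; lia. }
  exists (j * n0)%Z. split.
  - rewrite Z.abs_mul, Nat2Z.inj_mul, Z2Nat.id by lia. rewrite Z.abs_eq by lia.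
    apply Z.mul_le_mono_nonneg_r; lia.
  - apply near_frac_r. exists (- (j * m0))%Z.
    rewrite opp_IZR, !mult_IZR.
    replace (IZR j * IZR n0 * alpha - frac_part p - - (IZR j * IZR m0))
      with (IZR j * h - frac_part p) by (unfold h; ring).
    rewrite Rabs_left1; lra.
Qed.

(* The coding of the circle.  [code] is meant to be applied to representatives
   in [0,1); its colour changes exactly at 0, 1/8, 1/2 and at the points 1/c,
   c >= 9, which accumulate at 0. *)
Definition code (q : R) : bool :=
  if Rle_dec q 0 then true
  else if Rle_dec q (1/8) then Z.even (Int_part (/ q))
  else if Rle_dec q (1/2) then false else true.

Lemma code_frac p : 0 <= p < 1 -> code (frac_part p) = code p.
Proof. intros; rewrite frac_id; auto. Qed.

Lemma code_zero : code (frac_part 0) = true.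
Proof. rewrite frac_id by lra. unfold code. destruct Rle_dec; auto; lra. Qed.

Lemma code_neg q : -1/2 < q < 0 -> code (frac_part q) = true.
Proof.
  intros H. replace q with ((q + 1) + IZR (-1)) by (simpl; ring).
  rewrite frac_plus_int, frac_id by lra. unfold code.
  destruct Rle_dec; auto. destruct Rle_dec; [lra|]. destruct Rle_dec; [lra|]. auto.
Qed.

Lemma code_small q : 0 < q <= 1/8 -> code (frac_part q) = Z.even (Int_part (/ q)).
Proof.
  intros H. rewrite frac_id by lra. unfold code.
  destruct Rle_dec; [lra|]. destruct Rle_dec; [auto|lra].
Qed.

Lemma code_mid q : 1/8 < q <= 1/2 -> code (frac_part q) = false.
Proof.
  intros H. rewrite frac_id by lra. unfold code.
  destruct Rle_dec; [lra|]. destruct Rle_dec; [lra|]. destruct Rle_dec; [auto|lra].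
Qed.

Lemma code_high q : 1/2 < q < 1 -> code (frac_part q) = true.
Proof.
  intros H. rewrite frac_id by lra. unfold code.
  destruct Rle_dec; [lra|]. destruct Rle_dec; [lra|]. destruct Rle_dec; [lra|auto].
Qed.

Lemma cell_value q c : (8 <= c)%Z -> / (IZR c + 1) < q <= / IZR c -> Int_part (/ q) = c.
Proof.
  intros Hc H. apply IZR_le in Hc.
  assert (0 < / (IZR c + 1)) by (apply Rinv_0_lt_compat; lra).
  apply Int_part_eq. split.
  - rewrite <- (Rinv_inv (IZR c)). apply Rinv_le_contravar; lra.
  - rewrite <- (Rinv_inv (IZR c + 1)). apply Rinv_lt_contravar; [|lra].
    apply Rmult_lt_0_compat; lra.
Qed.

Lemma Int_inv_ge8 q : 0 < q <= 1/8 -> (8 <= Int_part (/ q))%Z.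
Proof.
  intros H. assert (8 <= / q).
  { replace 8 with (/ (1/8)) by field. apply Rinv_le_contravar; lra. }
  destruct (base_Int_part (/ q)) as [B1 B2].
  assert (IZR 7 < IZR (Int_part (/ q))) by (simpl; lra). apply lt_IZR in H1. lia.
Qed.

Lemma cell_bounds q : 0 < q <= 1/8 ->
  / (IZR (Int_part (/ q)) + 1) < q <= / IZR (Int_part (/ q)).
Proof.
  intros H. pose proof (Int_inv_ge8 q H) as H8. apply IZR_le in H8.
  destruct (base_Int_part (/ q)) as [B1 B2]. set (c := IZR (Int_part (/ q))) in *.
  split.
  - rewrite <- (Rinv_inv q). apply Rinv_lt_contravar; [|lra].
    apply Rmult_lt_0_compat; [apply Rinv_0_lt_compat|]; lra.
  - rewrite <- (Rinv_inv q). apply Rinv_le_contravar; lra.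
Qed.

(* The colour is constant on a left neighbourhood of every point (the cells
   are closed on the right). *)
Lemma code_const_left p : 0 <= p < 1 -> exists rho, rho > 0 /\
  forall q, p - rho < q <= p -> code (frac_part q) = code p.
Proof.
  intros Hp. rewrite <- (code_frac p) by lra.
  destruct (Req_dec p 0) as [->|H0].
  { exists (1/2). split; [lra|]. intros q Hq. rewrite code_zero.
    destruct (Req_dec q 0) as [->|Hq0]; [apply code_zero|]. apply code_neg; lra. }
  destruct (Rle_dec p (1/8)) as [H8|H8].
  { assert (Hp0 : 0 < p <= 1/8) by lra.
    pose proof (cell_bounds p Hp0) as [C1 C2]. pose proof (Int_inv_ge8 p Hp0) as C8.
    assert (0 < / (IZR (Int_part (/ p)) + 1)).
    { apply Rinv_0_lt_compat. apply IZR_le in C8. lra. }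
    exists (p - / (IZR (Int_part (/ p)) + 1)). split; [lra|]. intros q Hq.
    rewrite !code_small by lra. f_equal. apply cell_value; [apply Int_inv_ge8|]; lra. }
  destruct (Rle_dec p (1/2)) as [H2|H2].
  - exists (p - 1/8). split; [lra|]. intros q Hq. rewrite !code_mid; lra.
  - exists (p - 1/2). split; [lra|]. intros q Hq. rewrite !code_high; lra.
Qed.

Lemma code_const_right p : 0 < p < 1 -> exists rho v, rho > 0 /\
  forall q, p < q < p + rho -> code (frac_part q) = v.
Proof.
  intros Hp.
  destruct (Rlt_dec p (1/8)) as [H8|H8].
  2: destruct (Rlt_dec p (1/2)) as [H2|H2].
  2: { exists (1/2 - p), false. split; [lra|]. intros q Hq. apply code_mid; lra. }
  2: { exists (1 - p), true. split; [lra|]. intros q Hq. apply code_high; lra. }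
  assert (Hp8 : 0 < p <= 1/8) by lra.
  pose proof (cell_bounds p Hp8) as [C1 C2]. pose proof (Int_inv_ge8 p Hp8) as Hc8.
  set (c := Int_part (/ p)) in *.
  assert (Hc8' : 8 <= IZR c) by (apply IZR_le in Hc8; auto).
  (* the right neighbour cell is the cell of p, unless p = 1/c is its right end *)
  set (c' := if Req_EM_T p (/ IZR c) then (c - 1)%Z else c).
  assert (Hc' : (8 <= c')%Z /\ p < / IZR c').
  { unfold c'. destruct Req_EM_T as [E|E]; [|split; [auto|lra]].
    assert (c <> 8%Z) by (intros E8; rewrite E8 in E; simpl in E; lra).
    split; [lia|]. rewrite minus_IZR, E. apply Rinv_lt_contravar; simpl; nra. }
  assert (Hcell : / (IZR c' + 1) <= p).
  { unfold c'. destruct Req_EM_T as [E|E]; [|lra].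
    rewrite minus_IZR, E. simpl. replace (IZR c - 1 + 1) with (IZR c) by ring. lra. }
  destruct Hc' as [Hc'8 Hc'p].
  exists (Rmin (/ IZR c' - p) (1/8 - p)), (Z.even c'). split; [apply Rmin_pos; lra|].
  intros q Hq. pose proof (Rmin_l (/ IZR c' - p) (1/8 - p)).
  pose proof (Rmin_r (/ IZR c' - p) (1/8 - p)).
  rewrite code_small by lra. f_equal. apply cell_value; auto. split; lra.
Qed.

Lemma code_one_sided p e vL vR :
  (forall q, p - e < q <= p -> code (frac_part q) = vL) ->
  (forall q, p < q < p + e -> code (frac_part q) = vR) ->
  forall s, near s p e -> exists d K, Rabs d < e /\ s = p + d + IZR K /\
    code (frac_part s) = if Rle_dec d 0 then vL else vR.
Proof.
  intros HL HR s Hs. destruct (near_dec _ _ _ Hs) as [d [K [Hd Hsd]]].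
  exists d, K. split; auto. split; auto.
  rewrite Hsd, frac_plus_int. apply Rabs_def2 in Hd.
  destruct (Rle_dec d 0); [apply HL | apply HR]; lra.
Qed.

(* Points of [0,1) where the coding is continuous. *)
Definition regular_point (p : R) : Prop :=
  p <> 0 /\ p <> 1/2 /\ forall c : Z, p <> / IZR c.

Lemma code_const_regular p : 0 <= p < 1 -> regular_point p -> exists rho, rho > 0 /\
  forall q, Rabs (q - p) < rho -> code (frac_part q) = code p.
Proof.
  intros Hp [N0 [N2 Nc]]. rewrite <- (code_frac p) by lra.
  destruct (Rle_dec p (1/8)) as [H8|H8].
  2: destruct (Rle_dec p (1/2)) as [H2|H2].
  2: { exists (Rmin (p - 1/8) (1/2 - p)). split; [apply Rmin_pos; lra|].
       intros q Hq. apply Rabs_def2 in Hq.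
       pose proof (Rmin_l (p - 1/8) (1/2 - p)). pose proof (Rmin_r (p - 1/8) (1/2 - p)).
       rewrite !code_mid; lra. }
  2: { exists (Rmin (p - 1/2) (1 - p)). split; [apply Rmin_pos; lra|].
       intros q Hq. apply Rabs_def2 in Hq.
       pose proof (Rmin_l (p - 1/2) (1 - p)). pose proof (Rmin_r (p - 1/2) (1 - p)).
       rewrite !code_high; lra. }
  assert (Hp8 : 0 < p <= 1/8) by lra.
  assert (H8' : p < 1/8)
    by (destruct (Rle_lt_or_eq_dec _ _ H8) as [|E]; [|destruct (Nc 8%Z); rewrite E; simpl]; lra).
  pose proof (cell_bounds p Hp8) as [C1 C2]. pose proof (Int_inv_ge8 p Hp8) as Hc8.
  set (c := Int_part (/ p)) in *.
  assert (C2' : p < / IZR c) by (destruct (Rle_lt_or_eq_dec _ _ C2); [|destruct (Nc c)]; auto).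
  assert (0 < / (IZR c + 1)) by (apply Rinv_0_lt_compat; apply IZR_le in Hc8; lra).
  set (rho := Rmin (Rmin (p - / (IZR c + 1)) (/ IZR c - p)) (1/8 - p)).
  exists rho. split; [unfold rho; repeat apply Rmin_pos; lra|].
  intros q Hq. apply Rabs_def2 in Hq.
  assert (rho <= p - / (IZR c + 1) /\ rho <= / IZR c - p /\ rho <= 1/8 - p) as (R1 & R2 & R3).
  { unfold rho. pose proof (Rmin_l (Rmin (p - / (IZR c + 1)) (/ IZR c - p)) (1/8 - p)).
    pose proof (Rmin_r (Rmin (p - / (IZR c + 1)) (/ IZR c - p)) (1/8 - p)).
    pose proof (Rmin_l (p - / (IZR c + 1)) (/ IZR c - p)).
    pose proof (Rmin_r (p - / (IZR c + 1)) (/ IZR c - p)). lra. }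
  rewrite !code_small by lra. f_equal. apply cell_value; [exact Hc8|]. fold c. split; lra.
Qed.

Lemma finite_min (P : Z -> R -> Prop) (N : nat) :
  (forall n, exists rho, rho > 0 /\ P n rho) ->
  (forall n rho rho', 0 < rho' <= rho -> P n rho -> P n rho') ->
  exists rho, rho > 0 /\ forall n, (Z.abs n <= Z.of_nat N)%Z -> P n rho.
Proof.
  intros H Hm. induction N as [|N [r0 [Hr0 Hp0]]].
  - destruct (H 0%Z) as [rho [Hr Hp]]. exists rho; split; auto. intros n Hn.
    replace n with 0%Z by lia. auto.
  - destruct (H (Z.of_nat (S N))) as [r1 [Hr1 Hp1]].
    destruct (H (- Z.of_nat (S N))%Z) as [r2 [Hr2 Hp2]].
    set (rho := Rmin r0 (Rmin r1 r2)).
    assert (0 < rho <= r0 /\ rho <= r1 /\ rho <= r2) as (R0 & R1 & R2).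
    { unfold rho. pose proof (Rmin_l r0 (Rmin r1 r2)). pose proof (Rmin_r r0 (Rmin r1 r2)).
      pose proof (Rmin_l r1 r2). pose proof (Rmin_r r1 r2).
      assert (0 < Rmin r0 (Rmin r1 r2)) by (repeat apply Rmin_pos; auto). lra. }
    exists rho. split; [lra|]. intros n Hn.
    destruct (Z_le_dec (Z.abs n) (Z.of_nat N)) as [Hl|Hl]; [apply (Hm n r0); auto; lra|].
    assert (n = Z.of_nat (S N) \/ n = (- Z.of_nat (S N))%Z) as [->| ->] by lia;
      [apply (Hm _ r1) | apply (Hm _ r2)]; auto; lra.
Qed.

Lemma alternation_count (Q : nat -> R) (sg lo : R) (K : nat) : lo > 0 -> (sg = 1 \/ sg = -1) ->
  (forall j, (j < K)%nat -> lo < Q j <= 1/8) ->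
  (forall j, (S j < K)%nat -> sg * (Q (S j) - Q j) < 0) ->
  (forall j, (S j < K)%nat -> Z.even (Int_part (/ Q (S j))) <> Z.even (Int_part (/ Q j))) ->
  INR K - 1 <= / lo.
Proof.
  intros Hlo Hsg HB HM HP.
  set (f := fun j => IZR (Int_part (/ Q j))).
  assert (Hf : forall j, (j < K)%nat -> 8 <= f j < / lo).
  { intros j Hj. specialize (HB j Hj). unfold f. split.
    - apply IZR_le, Int_inv_ge8. lra.
    - destruct (base_Int_part (/ Q j)). assert (/ Q j < / lo) by (apply Rinv_lt_contravar; nra).
      lra. }
  (* floor(1/Q j) moves by at least one at each step, in the direction -sg *)
  assert (Hstep : forall j, (S j < K)%nat -> sg * f (S j) >= sg * f j + 1).
  { intros j Hj. specialize (HM j Hj). specialize (HP j Hj).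
    pose proof (HB j ltac:(lia)). pose proof (HB (S j) Hj).
    assert (Hne : Int_part (/ Q (S j)) <> Int_part (/ Q j))
      by (intros E; apply HP; rewrite E; auto).
    unfold f. destruct Hsg as [->| ->].
    - assert (Int_part (/ Q j) <= Int_part (/ Q (S j)))%Z
        by (apply Int_part_mono, Rinv_le_contravar; lra).
      assert (IZR (Int_part (/ Q j) + 1) <= IZR (Int_part (/ Q (S j)))) by (apply IZR_le; lia).
      rewrite plus_IZR in H2. lra.
    - assert (Int_part (/ Q (S j)) <= Int_part (/ Q j))%Z
        by (apply Int_part_mono, Rinv_le_contravar; lra).
      assert (IZR (Int_part (/ Q (S j)) + 1) <= IZR (Int_part (/ Q j))) by (apply IZR_le; lia).
      rewrite plus_IZR in H2. lra. }
  assert (Hind : forall j, (j < K)%nat -> sg * f j >= sg * f 0%nat + INR j).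
  { induction j as [|j IH]; intros Hj; [simpl; lra|].
    specialize (IH ltac:(lia)). specialize (Hstep j Hj). rewrite S_INR. lra. }
  destruct K as [|K]; [simpl; pose proof (Rinv_0_lt_compat lo Hlo); lra|].
  specialize (Hind K ltac:(lia)). pose proof (Hf K ltac:(lia)). pose proof (Hf 0%nat ltac:(lia)).
  rewrite S_INR. destruct Hsg as [-> | ->]; lra.
Qed.

(* If the colours of K > 2/rho + 1 points z + sg h_j, with h_j decreasing in
   (0, rho/2), alternate, then z is close to 0: for z <= -rho/2 all the
   points are negative (constant colour), for z >= rho they lie in
   (rho/2, 1/32) where alternations are counted by [alternation_count]. *)
Lemma alternation_near_zero z sg rho (h : nat -> R) (K : nat) :
  0 < rho -> (sg = 1 \/ sg = -1) -> / (rho / 2) + 1 < INR K ->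
  (forall j, (j < K)%nat -> 0 < h j < rho / 2 /\ -(1/32) < z + sg * h j < 1/32) ->
  (forall j, (S j < K)%nat -> h (S j) < h j) ->
  (forall j, (S j < K)%nat ->
     code (frac_part (z + sg * h (S j))) <> code (frac_part (z + sg * h j))) ->
  - (rho / 2) < z < rho.
Proof.
  intros Hr Hsg HK Hh Hdec Halt.
  assert (Hsh : forall j, (j < K)%nat -> - (rho / 2) < sg * h j < rho / 2)
    by (intros j Hj; destruct (Hh j Hj) as [[A B] _]; destruct Hsg as [-> | ->]; lra).
  assert (HK1 : (1 < K)%nat).
  { pose proof (Rinv_0_lt_compat (rho / 2) ltac:(lra)).
    destruct K as [|[|K]]; [simpl in HK; lra| simpl in HK; lra| lia]. }
  split; apply Rnot_le_lt; intros Hz.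
  - apply (Halt 0%nat HK1). destruct (Hh 0%nat ltac:(lia)) as [_ B0].
    destruct (Hh 1%nat HK1) as [_ B1].
    pose proof (Hsh 0%nat ltac:(lia)). pose proof (Hsh 1%nat HK1).
    rewrite !code_neg by lra. auto.
  - assert (INR K - 1 <= / (rho / 2)); [|lra].
    apply (alternation_count (fun j => z + sg * h j) sg (rho / 2)); auto; [lra| | |].
    + intros j Hj. destruct (Hh j Hj) as [_ B]. pose proof (Hsh j Hj). lra.
    + intros j Hj. specialize (Hdec j Hj). destruct Hsg as [-> | ->]; lra.
    + intros j Hj. destruct (Hh j ltac:(lia)) as [_ B]. destruct (Hh (S j) Hj) as [_ B'].
      pose proof (Hsh j ltac:(lia)). pose proof (Hsh (S j) Hj).
      specialize (Halt j Hj). rewrite !code_small in Halt by lra. auto.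
Qed.

Lemma list_bound (I : list Z) : exists B, forall k, In k I -> (Z.abs k <= B)%Z.
Proof.
  induction I as [|h t [B HB]]; [exists 0%Z; intros k []|].
  exists (Z.max (Z.abs h) B). intros k [E|Hk]; [subst; lia|]. specialize (HB k Hk). lia.
Qed.

Lemma two_distinct (J : Z -> Prop) : infinite_set J -> exists i j, J i /\ J j /\ i <> j.
Proof.
  intros Hinf. apply NNPP. intros Hn. apply Hinf.
  destruct (classic (exists i, J i)) as [[i Hi]|Hno].
  - exists (i :: nil). intros k Hk. left. apply NNPP. intros Hne. apply Hn. exists i, k. auto.
  - exists nil. intros k Hk. exfalso; apply Hno; eauto.
Qed.

Lemma injective_sequence (J : Z -> Prop) : infinite_set J ->
  exists s : nat -> Z, (forall n, J (s n)) /\ (forall n n', s n = s n' -> n = n').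
Proof.
  intros Hinf.
  assert (Hnext : forall l : list Z, exists k, J k /\ ~ In k l).
  { intros l. apply NNPP. intros Hn. apply Hinf. exists l. intros i Hi.
    apply NNPP. intros Hni. apply Hn. exists i; auto. }
  set (nx := fun l => proj1_sig (constructive_indefinite_description _ (Hnext l))).
  assert (Hnx : forall l, J (nx l) /\ ~ In (nx l) l).
  { intros l. unfold nx. destruct (constructive_indefinite_description _ (Hnext l)); auto. }
  (* prefix n = the first n chosen elements, each new one outside the prefix *)
  set (prefix := fix prefix (n : nat) : list Z :=
         match n with O => nil | S n' => nx (prefix n') :: prefix n' end).
  exists (fun n => nx (prefix n)). split; [intros; apply Hnx|].
  assert (Hin : forall n j, (j < n)%nat -> In (nx (prefix j)) (prefix n)).
  { induction n as [|n IH]; intros j Hj; [lia|]. simpl.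
    destruct (Nat.eq_dec j n) as [->|Hne]; [left; auto|right; apply IH; lia]. }
  intros n n' E. destruct (Nat.lt_total n n') as [H|[H|H]]; auto; exfalso.
  - apply (proj2 (Hnx (prefix n'))). rewrite <- E. apply Hin; auto.
  - apply (proj2 (Hnx (prefix n))). rewrite E. apply Hin; auto.
Qed.

Lemma one_sided_accumulation (e : Z -> R) (J : Z -> Prop) :
  (forall k l, J k -> J l -> e k = e l -> k = l) -> (forall k, J k -> 0 <= e k <= 1) ->
  infinite_set J -> exists es sg, (sg = 1 \/ sg = -1) /\
    forall eta, eta > 0 -> exists k, J k /\ 0 < sg * (e k - es) < eta.
Proof.
  intros Hinj Hbd Hinf.
  destruct (injective_sequence J Hinf) as [s [HsJ Hsinj]].
  destruct (injective_accumulation (fun n => e (s n))) as [es Hes].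
  { intros n; apply Hbd; auto. }
  { intros n n' E. apply Hsinj, Hinj; auto. }
  exists es.
  destruct (classic (forall eta, eta > 0 -> exists k, J k /\ 0 < 1 * (e k - es) < eta)) as [HA|HA].
  { exists 1; split; auto. }
  exists (-1); split; auto.
  apply not_all_ex_not in HA. destruct HA as [eta0 HA].
  apply imply_to_and in HA. destruct HA as [He0 HA].
  intros eta Heta. destruct (Hes (Rmin eta eta0) ltac:(apply Rmin_pos; lra)) as [n Hn].
  pose proof (Rmin_l eta eta0). pose proof (Rmin_r eta eta0).
  exists (s n). split; auto.
  destruct (Rle_dec (e (s n)) es) as [Hle|Hle].
  - rewrite Rabs_left1 in Hn by lra. lra.
  - exfalso. apply HA. exists (s n). split; auto. rewrite Rabs_pos_eq in Hn by lra. lra.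
Qed.

Lemma reference_point (e : Z -> R) (J : Z -> Prop) es sg :
  (forall k l c1 c2, J k -> J l -> e k - e l = / IZR c1 - / IZR c2 -> k = l) ->
  (sg = 1 \/ sg = -1) -> (forall eta, eta > 0 -> exists k, J k /\ 0 < sg * (e k - es) < eta) ->
  exists k1 rc v1, J k1 /\ 0 < Rabs (e k1 - es) < 1/128 /\ rc > 0 /\
    forall q, Rabs (q - (e k1 - es)) < rc -> code (frac_part q) = v1.
Proof.
  intros Hrat [-> | ->] Hside.
  - destruct (Hside (1/128) ltac:(lra)) as [k [Hk Hk2]].
    (* two elements of the form es + 1/c would contradict [Hrat], so one of two
       elements close to es is a regular point of the coding *)
    assert (Hreg : exists k', J k' /\ 0 < e k' - es < 1/128 /\ forall c, e k' - es <> / IZR c).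
    { destruct (classic (exists c0, e k - es = / IZR c0)) as [[c0 Hc0]|Hno].
      - destruct (Hside (1 * (e k - es)) ltac:(lra)) as [k' [Hk' Hk2']].
        exists k'. split; auto. split; [lra|]. intros c1 Hc1.
        assert (k = k') as <-; [|lra].
        apply (Hrat k k' c0 c1); auto.
        replace (e k - e k') with ((e k - es) - (e k' - es)) by ring. rewrite Hc0, Hc1. auto.
      - exists k. split; auto. split; [lra|]. intros c Hc. apply Hno. eauto. }
    destruct Hreg as [k' [Hk' [Hd Hnc]]].
    destruct (code_const_regular (e k' - es)) as [rc [Hrc HC]]; [lra| repeat split; auto; lra|].
    exists k', rc, (code (e k' - es)). split; auto. split; [rewrite Rabs_pos_eq; lra|]. auto.
  - destruct (Hside (1/128) ltac:(lra)) as [k [Hk Hk2]].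
    exists k, (- (e k - es) / 2), true. split; auto. split; [rewrite Rabs_left; lra|].
    split; [lra|]. intros q Hq. apply Rabs_def2 in Hq. apply code_neg. lra.
Qed.

Lemma decreasing_sequence (f : Z -> R) (J : Z -> Prop) rho : rho > 0 ->
  (forall eta, eta > 0 -> exists k, J k /\ 0 < f k < eta) ->
  exists g : nat -> Z, (forall j, J (g j) /\ 0 < f (g j) < rho) /\
    (forall j, f (g (S j)) < f (g j)) /\ (forall j j', g j = g j' -> j = j').
Proof.
  intros Hr Hsmall.
  assert (Fex : forall eta, exists k, 0 < eta -> J k /\ 0 < f k < eta).
  { intros eta. destruct (Rlt_dec 0 eta) as [H|H].
    - destruct (Hsmall eta H) as [k Hk]. exists k. auto.
    - exists 0%Z. intros; lra. }
  set (F := fun eta => proj1_sig (constructive_indefinite_description _ (Fex eta))).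
  assert (HF : forall eta, 0 < eta -> J (F eta) /\ 0 < f (F eta) < eta).
  { intros eta H. unfold F.
    destruct (constructive_indefinite_description _ (Fex eta)); simpl; auto. }
  set (g := fix g (j : nat) : Z := match j with O => F rho | S j' => F (f (g j')) end).
  assert (Hg : forall j, J (g j) /\ 0 < f (g j) < rho).
  { induction j as [|j [_ IH]]; [apply HF; lra|].
    destruct (HF (f (g j))) as [A B]; [lra|]. simpl. split; auto; lra. }
  assert (Hdec : forall j, f (g (S j)) < f (g j)) by (intros j; apply (HF (f (g j))), Hg).
  exists g. split; auto. split; auto.
  assert (Hmono : forall j j', (j < j')%nat -> f (g j') < f (g j)).
  { intros j j' H. induction j' as [|j' IH]; [lia|].
    destruct (Nat.eq_dec j j') as [->|Hne]; [apply Hdec|].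
    specialize (IH ltac:(lia)). specialize (Hdec j'). lra. }
  intros j j' E. destruct (Nat.lt_total j j') as [H|[H|H]]; auto;
    apply Hmono in H; rewrite E in H; lra.
Qed.

Lemma alternating_labels (g : nat -> Z) (k1 : Z) (v : bool) :
  (forall j j', g j = g j' -> j = j') -> (forall j, g j <> k1) ->
  exists b : Z -> bool, b k1 = v /\ forall j, b (g j) = Nat.even j.
Proof.
  intros Hinj Hk1.
  exists (fun k => if Z.eq_dec k k1 then v else
             if excluded_middle_informative (exists j, g j = k /\ Nat.even j = true)
             then true else false).
  split; [destruct (Z.eq_dec k1 k1); [auto|contradiction]|].
  intros j. destruct (Z.eq_dec (g j) k1) as [E|_]; [destruct (Hk1 j E)|].
  destruct excluded_middle_informative as [[j' [E1 E2]]|Hn].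
  - apply Hinj in E1. subst; auto.
  - destruct (Nat.even j) eqn:Ej; auto. exfalso; apply Hn; eauto.
Qed.

Lemma coding_not_independent (e : Z -> R) (J : Z -> Prop) :
  (forall k l, J k -> J l -> e k = e l -> k = l) ->
  (forall k l c1 c2, J k -> J l -> e k - e l = / IZR c1 - / IZR c2 -> k = l) ->
  (forall k, J k -> 0 <= e k <= 1) -> infinite_set J ->
  ~ (forall I, (forall k, In k I -> J k) ->
       (forall k l, In k I -> In l I -> Rabs (e k - e l) < 1/4) ->
       forall b : Z -> bool, exists t, forall k, In k I ->
         -(1/32) < t + e k < 1/32 /\ code (frac_part (t + e k)) = b k).
Proof.
  intros Hinj Hrat Hbd Hinf Hreal.
  destruct (one_sided_accumulation e J Hinj Hbd Hinf) as [es [sg [Hsg Hside]]].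
  assert (Hsg2 : sg * sg = 1) by (destruct Hsg as [-> | ->]; lra).
  destruct (reference_point e J es sg Hrat Hsg Hside) as [k1 [rc [v1 [Hk1 [Hd1 [Hrc HC1]]]]]].
  set (d1 := e k1 - es) in *.
  set (rho := Rmin rc (Rabs d1) / 2).
  assert (Hr : 0 < rho /\ rho <= rc / 2 /\ rho <= Rabs d1 / 2).
  { unfold rho. pose proof (Rmin_l rc (Rabs d1)). pose proof (Rmin_r rc (Rabs d1)).
    assert (0 < Rmin rc (Rabs d1)) by (apply Rmin_pos; lra). lra. }
  set (f := fun k => sg * (e k - es)).
  assert (Habs : forall k, Rabs (e k - es) = Rabs (f k)).
  { intros k. unfold f. rewrite Rabs_mult.
    replace (Rabs sg) with 1 by (destruct Hsg as [-> | ->];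
      [rewrite Rabs_R1 | rewrite Rabs_left by lra]; ring). ring. }
  destruct (decreasing_sequence f J (rho / 2) ltac:(lra) Hside) as [g [Hg [Hdec Hginj]]].
  assert (Hgk1 : forall j, g j <> k1).
  { intros j E. destruct (Hg j) as [_ Hh]. pose proof (Habs (g j)).
    rewrite (Rabs_pos_eq (f (g j))) in H by lra. rewrite E in H, Hh. fold d1 in H. lra. }
  destruct (alternating_labels g k1 (negb v1) Hginj Hgk1) as [b [Hbk1 Hbg]].
  destruct (INR_archimed 1 (/ (rho / 2) + 1) ltac:(lra)) as [K HK]. rewrite Rmult_1_r in HK.
  set (I := k1 :: map g (seq 0 K)).
  assert (HgI : forall j, (j < K)%nat -> In (g j) I)
    by (intros j Hj; right; apply in_map, in_seq; lia).
  assert (HIe : forall k, In k I -> J k /\ Rabs (e k - es) < 1/128).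
  { intros k [<-|Hk]; [split; auto; fold d1; lra|].
    apply in_map_iff in Hk. destruct Hk as [j [<- _]].
    destruct (Hg j) as [HJ Hh]. split; auto. rewrite Habs, Rabs_pos_eq; lra. }
  destruct (Hreal I) with (b := b) as [t Ht]; [intros k Hk; apply HIe; auto| |].
  { intros k l Hk Hl. destruct (HIe k Hk) as [_ A]. destruct (HIe l Hl) as [_ B].
    replace (e k - e l) with ((e k - es) - (e l - es)) by ring.
    apply Rabs_def2 in A, B. apply Rabs_def1; lra. }
  (* the points t + e (g j) = z + sg f (g j) have alternating colours *)
  set (z := t + es).
  assert (Hz : - (rho / 2) < z < rho).
  { assert (Hpt : forall j, t + e (g j) = z + sg * f (g j))
      by (intros j; unfold z, f; replace (sg * (sg * (e (g j) - es))) with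
            ((sg * sg) * (e (g j) - es)) by ring; rewrite Hsg2; ring).
    apply (alternation_near_zero z sg rho (fun j => f (g j)) K); auto; [lra| |].
    - intros j Hj. split; [apply Hg|]. rewrite <- Hpt. apply (Ht (g j) (HgI j Hj)).
    - intros j Hj. rewrite <- !Hpt.
      rewrite (proj2 (Ht _ (HgI j ltac:(lia)))), (proj2 (Ht _ (HgI (S j) Hj))), !Hbg.
      rewrite Nat.even_succ, <- Nat.negb_even. destruct (Nat.even j); discriminate. }
  (* but then t + e k1 = z + d1 is in the constancy interval around d1 *)
  destruct (Ht k1 ltac:(left; auto)) as [_ T2]. rewrite Hbk1, (HC1 (t + e k1)) in T2.
  - destruct v1; discriminate.
  - replace (t + e k1 - d1) with z by (unfold z, d1; ring). apply Rabs_def1; lra.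
Qed.

Lemma parity_integer (c0 : Z) (b : bool) : exists c, (c0 + 1 <= c <= c0 + 2)%Z /\ Z.even c = b.
Proof.
  destruct (Bool.bool_dec (Z.even (c0 + 1)) b) as [E|E]; [exists (c0 + 1)%Z; split; auto; lia|].
  exists (c0 + 2)%Z. split; [lia|]. replace (c0 + 2)%Z with (Z.succ (c0 + 1)) by lia.
  rewrite Z.even_succ, <- Z.negb_even. destruct (Z.even (c0 + 1)), b; simpl in *; congruence.
Qed.

Lemma parity_subinterval A lam (b : bool) : A > 0 -> lam > 0 -> A + lam <= 1/8 ->
  lam >= 3 * (A + lam)^2 ->
  exists Q lam1, A <= Q /\ Q + lam1 <= A + lam /\ lam1 >= A^2 / 2 /\ lam1 > 0 /\
    forall q, Q <= q <= Q + lam1 -> 0 < q <= 1/8 /\ Z.even (Int_part (/ q)) = b.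
Proof.
  intros HA Hl H8 Hq.
  set (c0 := Int_part (/ (A + lam))).
  assert (Hc0 : (8 <= c0)%Z) by (apply Int_inv_ge8; lra).
  destruct (base_Int_part (/ (A + lam))) as [B1 B2]. fold c0 in B1, B2.
  destruct (parity_integer c0 b) as [c [[Hc1 Hc2] Hcb]].
  set (C := IZR c).
  assert (HC : IZR c0 + 1 <= C <= IZR c0 + 2).
  { unfold C. apply IZR_le in Hc1, Hc2. rewrite plus_IZR in Hc1, Hc2. simpl in Hc1, Hc2. lra. }
  assert (HC8 : 9 <= C) by (apply IZR_le in Hc0; simpl in Hc0; lra).
  (* the cell of c lies in [A, A + lam] *)
  assert (F1 : 1 < C * (A + lam)).
  { assert (/ (A + lam) < C) by lra.
    apply (Rmult_lt_compat_r (A + lam)) in H; [|lra]. rewrite Rinv_l in H; lra. }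
  assert (F2 : A * (C + 1) <= 1).
  { assert (IZR c0 * (A + lam) <= 1).
    { replace 1 with (/ (A + lam) * (A + lam)) by (field; lra).
      apply Rmult_le_compat_r; lra. }
    assert (A * (IZR c0 + 3) * (A + lam) <= 1 * (A + lam)) by nra.
    apply Rmult_le_reg_r in H0; nra. }
  set (w := / C - / (C + 1)).
  assert (Hw : w = / (C * (C + 1))) by (unfold w; field; lra).
  assert (Hwpos : w > 0) by (rewrite Hw; apply Rinv_0_lt_compat; nra).
  assert (HinvC1 : A <= / (C + 1)).
  { apply (Rmult_le_reg_r (C + 1)); [lra|]. rewrite Rinv_l by lra. lra. }
  assert (HinvC : / C < A + lam).
  { apply (Rmult_lt_reg_r C); [lra|]. rewrite Rinv_l by lra. lra. }
  (* and it is long: w = 1/(C(C+1)) >= A^2 *)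
  assert (HwA : A ^ 2 <= w).
  { rewrite Hw. assert (A * C <= 1) by nra.
    assert (0 <= (1 - A * (C + 1)) * (A * C)) by (apply Rmult_le_pos; nra).
    assert (A ^ 2 * (C * (C + 1)) <= 1) by nra.
    apply (Rmult_le_reg_r (C * (C + 1))); [nra|]. rewrite Rinv_l by nra. lra. }
  exists (/ (C + 1) + w / 4), (w / 2).
  split; [lra|]. split; [unfold w in *; lra|]. split; [lra|]. split; [lra|].
  intros q Hq'. assert (HC1 : 0 < / (C + 1)) by (apply Rinv_0_lt_compat; lra).
  assert (/ C <= / 9) by (apply Rinv_le_contravar; lra).
  split; [unfold w in *; split; lra|].
  rewrite <- Hcb. f_equal. apply cell_value; [lia|]. unfold w in *. unfold C in *. split; lra.
Qed.

Fixpoint ratio_chain (e : Z -> R) (l : list Z) : Prop :=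
  match l with
  | nil => True
  | k :: l' => (match l' with nil => True | k' :: _ => e k' <= e k / 16 end) /\ ratio_chain e l'
  end.

Lemma ratio_chain_tail e k l : (forall x, In x (k :: l) -> e x > 0) -> ratio_chain e (k :: l) ->
  forall x, In x l -> e x <= e k / 16.
Proof.
  revert k. induction l as [|k' l' IH]; intros k Hpos [H1 HC] x Hx; [destruct Hx|].
  destruct Hx as [->|Hx]; auto.
  assert (e x <= e k' / 16) by (apply (IH k'); auto; intros y Hy; apply Hpos; right; auto).
  assert (e k' > 0) by (apply Hpos; right; left; auto).
  assert (e x > 0) by (apply Hpos; right; right; auto). lra.
Qed.

Lemma ratio_chain_nodup e l : (forall x, In x l -> e x > 0) -> ratio_chain e l -> NoDup l.
Proof.
  induction l as [|k l IH]; intros Hpos HC; constructor.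
  - intros Hin. pose proof (ratio_chain_tail e k l Hpos HC k Hin).
    assert (e k > 0) by (apply Hpos; left; auto). lra.
  - apply IH; [intros; apply Hpos; right; auto| destruct HC; auto].
Qed.

(* Nested intervals: a shift t in [T, T + lam] placing every t + e k, k in l,
   in a cell of parity b k, found by successive [parity_subinterval]s
   (each next e k is much smaller than the previous one). *)
Lemma nested_sweep E (e : Z -> R) (b : Z -> bool) : 0 < E <= 1/100 ->
  forall l T lam, 0 <= T -> lam > 0 -> T + lam <= 12 * E^2 ->
  ratio_chain e l -> (forall k, In k l -> 200 * E^2 <= e k <= E) ->
  (match l with nil => True | k :: _ => lam >= 3 * (T + e k + lam)^2 end) ->
  exists t, T <= t <= T + lam /\
    forall k, In k l -> 0 < t + e k <= 1/8 /\ Z.even (Int_part (/ (t + e k))) = b k.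
Proof.
  intros HE l. induction l as [|k l' IH]; intros T lam HT Hl HTl HC Hb Hh.
  { exists T. split; [lra|]. intros k []. }
  destruct HC as [Hnext HC].
  assert (HE2 : 0 < E^2 /\ E^2 <= E / 100) by (split; nra).
  destruct (Hb k ltac:(left; auto)) as [Hk1 Hk2].
  destruct (parity_subinterval (T + e k) lam (b k)) as [Q [lam1 [Q1 [Q2 [Q3 [Q4 Q5]]]]]];
    try lra.
  assert (He2 : e k ^ 2 <= (T + e k) ^ 2 /\ e k ^ 2 <= e k / 100) by (split; nra).
  destruct (IH (Q - e k) (e k ^ 2 / 2)) as [t [Ht1 Ht2]]; try lra; try nra; auto.
  - intros x Hx. apply Hb. right; auto.
  - destruct l' as [|k' l'']; auto. simpl in Hnext.
    destruct (Hb k' ltac:(right; left; auto)) as [Hk'1 _].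
    assert (P1 : Q - e k + e k' + e k ^ 2 / 2 <= e k / 7) by lra.
    assert (P0 : 0 <= Q - e k + e k' + e k ^ 2 / 2) by nra.
    nra.
  - exists t. split; [lra|]. intros x [<-|Hx]; [apply Q5; lra| apply Ht2; auto].
Qed.

Lemma sweep E (e : Z -> R) (b : Z -> bool) l : 0 < E <= 1/100 -> ratio_chain e l ->
  (forall k, In k l -> 200 * E^2 <= e k <= E) ->
  exists t, 0 <= t <= 12 * E^2 /\
    forall k, In k l -> 0 < t + e k <= 1/8 /\ Z.even (Int_part (/ (t + e k))) = b k.
Proof.
  intros HE HC Hb.
  assert (HE2 : 0 < E^2 /\ E^2 <= E / 100) by (split; nra).
  destruct (nested_sweep E e b HE l 0 (12 * E^2)) as [t [Ht1 Ht2]]; try lra; auto.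
  - destruct l as [|k l']; auto. destruct (Hb k ltac:(left; auto)).
    assert (0 + e k + 12 * E^2 <= 1.12 * E) by lra. nra.
  - exists t. split; [lra|auto].
Qed.

Lemma agree_mono N M x y : (N <= M)%Z -> agree M x y -> agree N x y.
Proof. intros H A n Hn. apply A. lia. Qed.

Lemma agree_sym N x y : agree N x y -> agree N y x.
Proof. intros A n Hn. symmetry; auto. Qed.

Lemma agree_trans N x y z : agree N x y -> agree N y z -> agree N x z.
Proof. intros A B n Hn. rewrite A; auto. Qed.

Lemma agree_shift N k x y : agree (N + Z.abs k) x y -> agree N (shiftn k x) (shiftn k y).
Proof. intros A n Hn. unfold shiftn. apply A. lia. Qed.

Section Extension.

Variable alpha : R.
Hypothesis Hirr : irrational alpha.

Definition itinerary (theta : R) : config :=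
  fun n => code (frac_part (theta + IZR n * alpha)).

Definition Xa (x : config) : Prop := forall N, exists theta, agree N x (itinerary theta).

Definition is_phase (x : config) (theta : R) : Prop :=
  forall eta, eta > 0 -> forall N, exists th, near th theta eta /\ agree N x (itinerary th).

Definition phase (x : config) : R :=
  match excluded_middle_informative (exists th, 0 <= th < 1 /\ is_phase x th) with
  | left H => proj1_sig (constructive_indefinite_description _ H)
  | right _ => 0
  end.

Lemma itinerary_shift_int th k : itinerary (th + IZR k) = itinerary th.
Proof.
  apply functional_extensionality. intros n. unfold itinerary.
  replace (th + IZR k + IZR n * alpha) with ((th + IZR n * alpha) + IZR k) by ring.
  rewrite frac_plus_int; auto.
Qed.

Lemma itinerary_frac th : itinerary (frac_part th) = itinerary th.
Proof. rewrite (frac_decomp th) at 2. rewrite Rplus_comm. symmetry. apply itinerary_shift_int. Qed.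

Lemma shift_itinerary th k : shiftn k (itinerary th) = itinerary (th + IZR k * alpha).
Proof.
  apply functional_extensionality. intros n. unfold shiftn, itinerary.
  rewrite plus_IZR. do 2 f_equal. ring.
Qed.

Lemma Xa_itinerary th : Xa (itinerary th).
Proof. intros N. exists th. intros n _; auto. Qed.

Lemma Xa_shift x k : Xa x -> Xa (shiftn k x).
Proof.
  intros HX N. destruct (HX (N + Z.abs k)%Z) as [th Hth].
  exists (th + IZR k * alpha). rewrite <- shift_itinerary. apply agree_shift; auto.
Qed.

Lemma Xa_subshift : subshift Xa.
Proof.
  split; [exists (itinerary 0); apply Xa_itinerary|].
  split; [|split; intros x H; apply Xa_shift; auto].
  intros x H N. destruct (H N) as [y [Hy A]]. destruct (Hy N) as [th Ht].
  exists th. eapply agree_trans; eauto.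
Qed.

(* Two itineraries whose phases are at circle distance between eps and 1/2
   differ in the window of width N: some n alpha, |n| <= N, sends the two
   phases across 1/2, into (1/8,1/2] and (1/2,1) respectively. *)
Lemma itineraries_differ eps (N : nat) : 0 < eps <= 1/4 ->
  (forall p, exists n : Z, (Z.abs n <= Z.of_nat N)%Z /\ near (IZR n * alpha) p (eps/4)) ->
  forall th th', eps <= frac_part (th' - th) <= 1/2 ->
  ~ agree (Z.of_nat N) (itinerary th) (itinerary th').
Proof.
  intros He Hd th th' Hdd A.
  set (d := frac_part (th' - th)) in *.
  set (P := 1/2 - d/2).
  destruct (Hd (P - th)) as [n [Hn Hnear]].
  assert (N1 : near (th + IZR n * alpha) P (eps/4)).
  { replace P with ((P - th) + th) by ring. rewrite (Rplus_comm th). apply near_add. auto. }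
  assert (N2 : near (th' + IZR n * alpha) (P + d) (eps/4)).
  { replace (th' + IZR n * alpha) with
      ((th + IZR n * alpha + d) + IZR (Int_part (th' - th))) by (unfold d, frac_part; ring).
    apply near_shift_l. apply near_add; auto. }
  apply near_interval in N1; [|unfold P; lra|unfold P; lra].
  apply near_interval in N2; [|unfold P; lra|unfold P; lra].
  specialize (A n Hn). unfold itinerary in A.
  rewrite <- (frac_frac (th + IZR n * alpha)), <- (frac_frac (th' + IZR n * alpha)) in A.
  rewrite code_mid, code_high in A by (unfold P in *; lra). discriminate.
Qed.

Lemma separation eps : eps > 0 ->
  exists N : Z, forall th th', agree N (itinerary th) (itinerary th') -> near th th' eps.
Proof.
  intros He. set (e := Rmin eps (1/4)).
  assert (He' : 0 < e <= 1/4) by (unfold e; split; [apply Rmin_pos; lra| apply Rmin_r]).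
  destruct (uniform_density alpha Hirr (e/4)) as [N HN]; [lra|].
  exists (Z.of_nat N). intros th th' A.
  apply (near_mono _ _ e); [apply Rmin_l|].
  apply NNPP. intros Hn.
  pose proof (frac_bounds (th' - th)) as Fb.
  set (d := frac_part (th' - th)) in *.
  destruct (Rlt_dec d e) as [Hl|Hl].
  { apply Hn, near_sym. exists (Int_part (th' - th)). unfold d, frac_part in *.
    rewrite Rabs_pos_eq; lra. }
  destruct (Rlt_dec (1 - e) d) as [Hh|Hh].
  { apply Hn, near_sym. exists (Int_part (th' - th) + 1)%Z. rewrite plus_IZR.
    unfold d, frac_part in *. rewrite Rabs_left1; lra. }
  destruct (Rle_dec d (1/2)) as [H2|H2].
  - apply (itineraries_differ e N He' HN th th'); auto. fold d. lra.
  - apply (itineraries_differ e N He' HN th' th); [|apply agree_sym; auto].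
    replace (th - th') with ((1 - d) + IZR (- Int_part (th' - th) - 1))
      by (rewrite minus_IZR, opp_IZR; unfold d, frac_part; simpl; ring).
    rewrite frac_plus_int, frac_id; lra.
Qed.

Lemma phases_close eps : eps > 0 -> exists N : Z, forall x y th th',
  is_phase x th -> is_phase y th' -> agree N x y -> near th th' eps.
Proof.
  intros He. destruct (separation (eps/3)) as [N HN]; [lra|].
  exists N. intros x y th th' Cx Cy A.
  destruct (Cx (eps/3) ltac:(lra) N) as [a [Na Aa]].
  destruct (Cy (eps/3) ltac:(lra) N) as [b [Nb Ab]].
  assert (near a b (eps/3)).
  { apply HN. apply (agree_trans N _ x); [apply agree_sym; auto|].
    apply (agree_trans N _ y); auto. }
  replace eps with (eps/3 + eps/3 + eps/3) by field.
  apply (near_trans _ b); [apply (near_trans _ a); [apply near_sym|]|]; auto.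
Qed.

Lemma phase_unique x th1 th2 : is_phase x th1 -> is_phase x th2 -> frac_part th1 = frac_part th2.
Proof.
  intros C1 C2. apply near_all_eq. intros e He.
  destruct (phases_close e He) as [N HN]. apply (HN x x); auto. intros n _; auto.
Qed.

(* Every point of Xa has a phase (compactness of the circle). *)
Lemma phase_exists x : Xa x -> exists th, 0 <= th < 1 /\ is_phase x th.
Proof.
  intros HX.
  assert (F : forall n : nat, {th | agree (Z.of_nat n) x (itinerary th)}).
  { intros n. apply constructive_indefinite_description. apply HX. }
  set (u := fun n => frac_part (proj1_sig (F n))).
  destruct (Bolzano_Weierstrass u (fun c => 0 <= c <= 1) (compact_P3 0 1)) as [l Hl].
  { intros n. unfold u. pose proof (frac_bounds (proj1_sig (F n))). lra. }
  exists (frac_part l). split; [apply frac_bounds|].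
  intros eta Heta N.
  destruct (Hl (fun y => Rabs (y - l) < eta) (Z.to_nat N)) as [p [Hp Vp]].
  { exists (mkposreal eta Heta). intros y Hy. exact Hy. }
  exists (u p). split.
  - apply near_frac_r. exists 0%Z. replace (u p - l - IZR 0) with (u p - l) by (simpl; ring). auto.
  - unfold u. rewrite itinerary_frac. destruct (F p) as [th Ht]; simpl.
    apply (agree_mono N (Z.of_nat p)); auto. lia.
Qed.

Lemma phase_range x : 0 <= phase x < 1.
Proof.
  unfold phase. destruct excluded_middle_informative as [H|H]; [|lra].
  destruct (constructive_indefinite_description _ H) as [th [Ht Hc]]; simpl; auto.
Qed.

Lemma phase_spec x : Xa x -> is_phase x (phase x).
Proof.
  intros HX. unfold phase. destruct excluded_middle_informative as [H|H].
  - destruct (constructive_indefinite_description _ H) as [th [Hr Ht]]; simpl; auto.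
  - exfalso; apply H, phase_exists; auto.
Qed.

Lemma phase_eq x th : Xa x -> 0 <= th < 1 -> is_phase x th -> phase x = th.
Proof.
  intros HX Ht C. pose proof (phase_unique x _ _ (phase_spec x HX) C).
  rewrite !frac_id in H; auto. apply phase_range.
Qed.

Lemma is_phase_frac x th : is_phase x th -> is_phase x (frac_part th).
Proof.
  intros C eta He N. destruct (C eta He N) as [a [Na Aa]]. exists a; split; auto.
  apply near_frac_r; auto.
Qed.

Lemma phase_shift x k : Xa x -> phase (shiftn k x) = frac_part (phase x + IZR k * alpha).
Proof.
  intros HX. apply phase_eq; [apply Xa_shift; auto| apply frac_bounds|].
  apply is_phase_frac. intros eta He N.
  destruct (phase_spec x HX eta He (N + Z.abs k)%Z) as [a [Na Aa]].
  exists (a + IZR k * alpha). split; [apply near_add; auto|].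
  rewrite <- shift_itinerary. apply agree_shift; auto.
Qed.

Lemma phase_itinerary th : phase (itinerary th) = frac_part th.
Proof.
  apply phase_eq; [apply Xa_itinerary| apply frac_bounds|].
  apply is_phase_frac. intros eta He N. exists th. split; [apply near_refl; auto|].
  intros n _; auto.
Qed.

Lemma phase_continuous eps : eps > 0 ->
  exists N : Z, forall x y, Xa x -> Xa y -> agree N x y -> near (phase x) (phase y) eps.
Proof.
  intros He. destruct (phases_close eps He) as [N HN].
  exists N. intros x y Hx Hy. apply HN; apply phase_spec; auto.
Qed.

Lemma phase_factor : factor_map_onto_rotation Xa alpha phase.
Proof.
  split; [|split; [|split]].
  - intros; apply phase_range.
  - intros x Hx eps He. destruct (phase_continuous eps He) as [N HN]. exists N.
    intros y Hy A. apply near_circ. apply HN; auto.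
  - intros th Ht. exists (itinerary th). split; [apply Xa_itinerary|].
    rewrite phase_itinerary. apply frac_id; auto.
  - intros x Hx. rewrite phase_shift; auto. f_equal. simpl. ring.
Qed.


Lemma coordinate_of_phase z n p rho : Xa z -> rho > 0 ->
  near (phase z + IZR n * alpha) p rho ->
  (forall q, Rabs (q - p) < 2 * rho -> code (frac_part q) = code p) -> z n = code p.
Proof.
  intros HZ Hr Hn Hc.
  destruct (phase_spec z HZ rho Hr (Z.abs n)) as [a [Na Aa]].
  rewrite (Aa n ltac:(lia)). unfold itinerary.
  assert (near (a + IZR n * alpha) p (rho + rho)) as [k Hk]
    by (apply (near_trans _ (phase z + IZR n * alpha)); [apply near_add|]; auto).
  replace (a + IZR n * alpha) with ((a + IZR n * alpha - IZR k) + IZR k) by ring.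
  rewrite frac_plus_int. apply Hc.
  replace (a + IZR n * alpha - IZR k - p) with (a + IZR n * alpha - p - IZR k) by ring. lra.
Qed.

Lemma regular_fibre th : (forall n, regular_point (frac_part (th + IZR n * alpha))) ->
  forall z, Xa z -> phase z = frac_part th -> z = itinerary th.
Proof.
  intros Hreg z Hz Hpz. apply functional_extensionality. intros n.
  set (p := frac_part (th + IZR n * alpha)).
  destruct (code_const_regular p (frac_bounds _) (Hreg n)) as [rho [Hr HC]].
  apply (coordinate_of_phase z n p (rho / 2)); auto; [lra| |].
  - rewrite Hpz. unfold p. apply near_frac_r, near_add, near_frac_l, near_refl. lra.
  - intros q Hq. apply HC. lra.
Qed.

Lemma regular_multiple x (q k : Z) : k <> 0%Z -> IZR k * alpha = IZR q * x ->
  regular_point (frac_part x).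
Proof.
  intros Hk Hx.
  assert (Hirr_x : forall u v : Z, v <> 0%Z -> frac_part x <> IZR u / IZR v).
  { intros u v Hv E. apply Hk. apply (irr_rat alpha Hirr k (q * u) v (q * Int_part x) Hv).
    rewrite Hx, (frac_decomp x) at 1. rewrite E, !mult_IZR. field. apply not_0_IZR; auto. }
  split; [|split].
  - intros E. apply (Hirr_x 0%Z 1%Z); [lia|]. rewrite E. simpl. field.
  - intros E. apply (Hirr_x 1%Z 2%Z); [lia|]. rewrite E. simpl. field.
  - intros c E. destruct (inv_int_rational c) as [u [v [Hv Euv]]].
    apply (Hirr_x u v Hv). rewrite E. auto.
Qed.

Lemma regular_orbit_half m : regular_point (frac_part (alpha / 2 + IZR m * alpha)).
Proof.
  apply (regular_multiple _ 2 (2 * m + 1)); [lia|].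
  rewrite plus_IZR, mult_IZR. simpl. field.
Qed.

(* Moving the phase slightly to the left does not change a finite window of
   an itinerary (the cells of the coding are closed on the right). *)
Lemma itinerary_left_stable th (N : nat) : exists rho, rho > 0 /\
  forall s, 0 < s < rho -> agree (Z.of_nat N) (itinerary th) (itinerary (th - s)).
Proof.
  destruct (finite_min (fun n rho => forall q,
      frac_part (th + IZR n * alpha) - rho < q <= frac_part (th + IZR n * alpha) ->
      code (frac_part q) = code (frac_part (th + IZR n * alpha))) N) as [rho [Hr HP]].
  { intros n. apply code_const_left, frac_bounds. }
  { intros n rho rho' Hrr HP q Hq. apply HP. lra. }
  exists rho. split; auto. intros s Hs n Hn. unfold itinerary.
  replace (th - s + IZR n * alpha) with
    ((frac_part (th + IZR n * alpha) - s) + IZR (Int_part (th + IZR n * alpha)))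
    by (unfold frac_part; ring).
  rewrite frac_plus_int. symmetry. apply (HP n); [lia| lra].
Qed.

Lemma phase_almost_one_to_one : almost_one_to_one Xa phase.
Proof.
  intros x Hx N. destruct (Hx N) as [th1 A1].
  destruct (itinerary_left_stable th1 (Z.to_nat N)) as [rho [Hr Hstab]].
  destruct (uniform_density alpha Hirr (rho/2) ltac:(lra)) as [K HK].
  destruct (HK (th1 - rho/2 - alpha/2)) as [j [_ Hj]].
  (* a phase with regular orbit, slightly to the left of th1 *)
  set (th := alpha / 2 + IZR j * alpha).
  assert (Hn : near th (th1 - rho/2) (rho/2)).
  { replace th with (IZR j * alpha + alpha / 2) by (unfold th; ring).
    replace (th1 - rho/2) with ((th1 - rho/2 - alpha/2) + alpha / 2) by ring.
    apply near_add; auto. }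
  destruct Hn as [K0 HK0]. apply Rabs_def2 in HK0.
  exists (itinerary th). split; [apply Xa_itinerary|]. split.
  - intros n Hn. rewrite (A1 n Hn).
    replace th with (th1 - (th1 - th + IZR K0) + IZR K0) by ring.
    rewrite itinerary_shift_int. apply Hstab; [lra| lia].
  - intros z Hz Hpz. rewrite phase_itinerary in Hpz. apply regular_fibre; auto.
    intros n. replace (th + IZR n * alpha) with (alpha / 2 + IZR (j + n) * alpha)
      by (unfold th; rewrite plus_IZR; ring).
    apply regular_orbit_half.
Qed.


Lemma fine_window rho m : rho > 0 -> exists Nw, (Z.abs m <= Nw)%Z /\
  forall x y, Xa x -> Xa y -> agree Nw x y -> near (phase x) (phase y) rho.
Proof.
  intros Hr. destruct (phase_continuous rho Hr) as [Nc Hc].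
  exists (Z.max Nc (Z.abs m)). split; [lia|].
  intros x y Hx Hy A. apply Hc, (agree_mono _ (Z.max Nc (Z.abs m))); auto; lia.
Qed.

Section Pair.

Variables x0 x1 : config.
Hypotheses (Hx0 : Xa x0) (Hx1 : Xa x1).

Definition pt (b : bool) : config := if b then x1 else x0.

Lemma Xa_pt b : Xa (pt b).
Proof. destruct b; auto. Qed.

Definition tame_pair : Prop := exists Nw, forall J,
  indep_set Xa (agree Nw x0) (agree Nw x1) J -> ~ infinite_set J.

Lemma realize_pattern Nw rho J : rho > 0 ->
  (forall x y, Xa x -> Xa y -> agree Nw x y -> near (phase x) (phase y) rho) ->
  indep_set Xa (agree Nw x0) (agree Nw x1) J ->
  forall I, (forall i, In i I -> J i) -> forall a : Z -> bool, exists th, forall k, In k I ->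
    near (th + IZR k * alpha) (phase (pt (a k))) (2 * rho) /\
    forall m, (Z.abs m <= Nw)%Z -> itinerary th (k + m)%Z = pt (a k) m.
Proof.
  intros Hr Hc Hind I HI a.
  destruct (Hind I HI a) as [y [Hy Hya]].
  destruct (list_bound I) as [B HB].
  destruct (phase_spec y Hy rho Hr (Nw + B)%Z) as [th [Nth Ath]].
  exists th. intros k Hk.
  assert (Ak : agree Nw (pt (a k)) (shiftn k y)) by (specialize (Hya k Hk); destruct (a k); auto).
  split.
  - pose proof (Hc _ _ (Xa_pt (a k)) (Xa_shift y k Hy) Ak) as Hn.
    rewrite phase_shift in Hn by auto. apply near_sym in Hn. rewrite near_frac_l in Hn.
    replace (2 * rho) with (rho + rho) by ring.
    apply (near_trans _ (phase y + IZR k * alpha)); auto. apply near_add; auto.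
  - intros m Hm. specialize (HB k Hk).
    rewrite <- (Ath (k + m)%Z) by lia. rewrite (Ak m Hm). unfold shiftn. f_equal; lia.
Qed.

Lemma realize_two Nw rho J i j : rho > 0 ->
  (forall x y, Xa x -> Xa y -> agree Nw x y -> near (phase x) (phase y) rho) ->
  indep_set Xa (agree Nw x0) (agree Nw x1) J -> J i -> J j -> i <> j ->
  forall bi bj : bool, exists th,
    near (th + IZR i * alpha) (phase (pt bi)) (2 * rho) /\
    near (th + IZR j * alpha) (phase (pt bj)) (2 * rho).
Proof.
  intros Hr Hc Hind Hi Hj Hij bi bj.
  destruct (realize_pattern Nw rho J Hr Hc Hind (i :: j :: nil)
              ltac:(intros k [<-|[<-|[]]]; auto) (fun k => if Z.eq_dec k i then bi else bj))
    as [th Hth].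
  exists th. split.
  - destruct (Hth i ltac:(simpl; auto)) as [A _]. destruct (Z.eq_dec i i); [auto|contradiction].
  - destruct (Hth j ltac:(simpl; auto)) as [A _]. destruct (Z.eq_dec j i); [lia|auto].
Qed.

Lemma realize_same_fibre m Nw rho J : phase x0 = phase x1 -> rho > 0 -> (Z.abs m <= Nw)%Z ->
  (forall x y, Xa x -> Xa y -> agree Nw x y -> near (phase x) (phase y) rho) ->
  indep_set Xa (agree Nw x0) (agree Nw x1) J ->
  forall I, (forall i, In i I -> J i) -> forall a : Z -> bool, exists th, forall k, In k I ->
    near (th + IZR (k + m) * alpha) (frac_part (phase x0 + IZR m * alpha)) (2 * rho) /\
    code (frac_part (th + IZR (k + m) * alpha)) = pt (a k) m.
Proof.
  intros Heq Hr Hm Hc Hind I HI a.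
  destruct (realize_pattern Nw rho J Hr Hc Hind I HI a) as [th Hth].
  exists th. intros k Hk. destruct (Hth k Hk) as [Nk Ck]. split.
  - assert (Hpk : phase (pt (a k)) = phase x0) by (unfold pt; destruct (a k); auto).
    rewrite Hpk in Nk. apply near_frac_r. rewrite plus_IZR.
    replace (th + (IZR k + IZR m) * alpha) with ((th + IZR k * alpha) + IZR m * alpha) by ring.
    apply near_add; auto.
  - rewrite <- (Ck m Hm). auto.
Qed.

(* Case A: different fibres.  The patterns (0,0) and (0,1) on {i,j} would
   make (j - i) alpha close both to 0 and to phase x1 - phase x0. *)
Lemma distinct_phases_tame : phase x0 <> phase x1 -> tame_pair.
Proof.
  intros Hne.
  assert (Hex : exists e0, e0 > 0 /\ ~ near (phase x0) (phase x1) e0).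
  { apply NNPP. intros Hn. apply Hne.
    assert (frac_part (phase x0) = frac_part (phase x1)).
    { apply near_all_eq. intros e He. apply NNPP. intros Hn'. apply Hn. exists e; auto. }
    rewrite !frac_id in H by apply phase_range. auto. }
  destruct Hex as [e0 [He0 Hn0]].
  set (rho := e0 / 8).
  destruct (phase_continuous rho ltac:(unfold rho; lra)) as [Nw Hc].
  exists Nw. intros J Hind Hinf.
  destruct (two_distinct J Hinf) as [i [j [Hi [Hj Hij]]]].
  destruct (realize_two Nw rho J i j ltac:(unfold rho; lra) Hc Hind Hi Hj Hij false false)
    as [th [Ni Nj]].
  destruct (realize_two Nw rho J i j ltac:(unfold rho; lra) Hc Hind Hi Hj Hij false true)
    as [th' [Ni' Nj']].
  simpl in Ni, Nj, Ni', Nj'.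
  pose proof (near_sub2 _ _ _ _ _ _ Nj Ni) as D1.
  pose proof (near_sub2 _ _ _ _ _ _ Nj' Ni') as D2.
  replace (th + IZR j * alpha - (th + IZR i * alpha)) with ((IZR j - IZR i) * alpha) in D1 by ring.
  replace (th' + IZR j * alpha - (th' + IZR i * alpha)) with ((IZR j - IZR i) * alpha) in D2
    by ring.
  apply near_sym in D1. pose proof (near_trans _ _ _ _ _ D1 D2) as D3.
  apply Hn0. destruct D3 as [k Hk]. exists k.
  replace (phase x0 - phase x1 - IZR k) with (phase x0 - phase x0 - (phase x1 - phase x0) - IZR k)
    by ring.
  unfold rho in Hk. lra.
Qed.

(* Case B1: same fibre, differing at a coordinate m whose phase p is not the
   discontinuity 0.  Near p the coding is constant on each side, so the colour
   seen at time k + m only depends on the side of p where the realising phase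
   puts it; the patterns (0,1) and (1,0) on {i,j} need opposite orders of the
   two (equal) offsets. *)
Lemma off_zero_tame m : phase x0 = phase x1 -> x0 m <> x1 m ->
  frac_part (phase x0 + IZR m * alpha) <> 0 -> tame_pair.
Proof.
  intros Heq Hm Hp0.
  set (p := frac_part (phase x0 + IZR m * alpha)) in *.
  assert (Hp : 0 < p < 1)
    by (pose proof (frac_bounds (phase x0 + IZR m * alpha)); fold p in H; lra).
  destruct (code_const_left p ltac:(lra)) as [rL [HrL HL]].
  destruct (code_const_right p Hp) as [rR [vR [HrR HR]]].
  set (rho := Rmin (Rmin rL rR) (1/4) / 4).
  assert (Hrho : 0 < rho /\ 2 * rho <= rL /\ 2 * rho <= rR /\ rho <= 1/16).
  { unfold rho. pose proof (Rmin_l (Rmin rL rR) (1/4)). pose proof (Rmin_r (Rmin rL rR) (1/4)).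
    pose proof (Rmin_l rL rR). pose proof (Rmin_r rL rR).
    assert (0 < Rmin (Rmin rL rR) (1/4)) by (repeat apply Rmin_pos; lra). lra. }
  destruct (fine_window rho m ltac:(lra)) as [Nw [HmNw Hc]].
  exists Nw. intros J Hind Hinf.
  destruct (two_distinct J Hinf) as [i [j [Hi [Hj Hij]]]].
  (* labels bi, bj at times i, j are seen as colours at offsets di, dj from p *)
  set (side := fun d => if Rle_dec d 0 then code p else vR).
  assert (Hside : forall bi bj, exists di dj K, Rabs di < 2 * rho /\ Rabs dj < 2 * rho /\
            dj - di = IZR (j - i) * alpha + IZR K /\ pt bi m = side di /\ pt bj m = side dj).
  { intros bi bj.
    destruct (realize_same_fibre m Nw rho J Heq ltac:(lra) HmNw Hc Hind (i :: j :: nil)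
                ltac:(intros k [<-|[<-|[]]]; auto) (fun k => if Z.eq_dec k i then bi else bj))
      as [th Hth].
    assert (HL' : forall q, p - 2 * rho < q <= p -> code (frac_part q) = code p)
      by (intros q Hq; apply HL; lra).
    assert (HR' : forall q, p < q < p + 2 * rho -> code (frac_part q) = vR)
      by (intros q Hq; apply HR; lra).
    destruct (Hth i ltac:(simpl; auto)) as [Ni Ci]. destruct (Hth j ltac:(simpl; auto)) as [Nj Cj].
    destruct (code_one_sided _ _ _ _ HL' HR' _ Ni) as [di [Ki [Hdi [Ei Vi]]]].
    destruct (code_one_sided _ _ _ _ HL' HR' _ Nj) as [dj [Kj [Hdj [Ej Vj]]]].
    revert Ci Cj. destruct (Z.eq_dec i i); [|contradiction]. destruct (Z.eq_dec j i); [lia|].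
    intros Ci Cj. exists di, dj, (Ki - Kj)%Z. repeat split; auto; [| unfold side; congruence..].
    rewrite !minus_IZR, !plus_IZR in *. lra. }
  destruct (Hside false true) as [di [dj [K [Hdi [Hdj [HK [Vi Vj]]]]]]].
  destruct (Hside true false) as [di' [dj' [K' [Hdi' [Hdj' [HK' [Vi' Vj']]]]]]].
  (* the two offset differences agree modulo 1, and are small, hence equal *)
  assert (HD : dj - di = dj' - di').
  { assert (E : IZR (K - K') = (dj - di) - (dj' - di')) by (rewrite minus_IZR; lra).
    assert (Rabs (IZR (K - K')) < 1).
    { rewrite E. apply Rabs_def2 in Hdi, Hdj, Hdi', Hdj'. apply Rabs_def1; lra. }
    apply int_small in H. rewrite H in E. simpl in E. lra. }
  unfold pt, side in Vi, Vj, Vi', Vj'.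
  destruct (Rle_dec di 0); destruct (Rle_dec dj 0); destruct (Rle_dec di' 0);
    destruct (Rle_dec dj' 0); try (apply Hm; congruence); lra.
Qed.

(* Case B2: same fibre, differing at a coordinate m whose phase is the
   discontinuity 0.  Realising patterns of J by phases th makes the points
   th + (k + m) alpha, k in J, carry arbitrary colours while staying near 0,
   which [coding_not_independent] forbids. *)
Lemma at_zero_tame m : phase x0 = phase x1 -> x0 m <> x1 m ->
  frac_part (phase x0 + IZR m * alpha) = 0 -> tame_pair.
Proof.
  intros Heq Hm Hp0.
  set (rho := 1/64).
  destruct (fine_window rho m ltac:(unfold rho; lra)) as [Nw [HmNw Hc]].
  exists Nw. intros J Hind Hinf.
  set (e := fun k => frac_part (IZR (k + m) * alpha)).
  apply (coding_not_independent e J).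
  - intros k l _ _ E. apply (frac_mult_inj alpha Hirr) in E. lia.
  - intros k l c1 c2 _ _ E. apply (frac_mult_reciprocals alpha Hirr) in E. lia.
  - intros k _. unfold e. pose proof (frac_bounds (IZR (k + m) * alpha)). lra.
  - auto.
  - intros I HI Hclose b.
    destruct I as [|k0 I']; [exists 0; intros k []|].
    (* the label at k is chosen so that coordinate m of [pt] has colour b k *)
    set (a := fun k => Bool.eqb (b k) (x1 m)).
    assert (Ha : forall k, pt (a k) m = b k).
    { intros k. unfold a, pt. destruct (Bool.eqb (b k) (x1 m)) eqn:E.
      - symmetry. apply Bool.eqb_prop; auto.
      - revert E Hm. destruct (x0 m), (x1 m), (b k); simpl; congruence. }
    destruct (realize_same_fibre m Nw rho J Heq ltac:(unfold rho; lra) HmNw Hc Hind _ HI a)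
      as [th Hth].
    assert (Hpt : forall k, In k (k0 :: I') -> exists K, Rabs (th + e k - IZR K) < 2 * rho /\
               code (frac_part (th + e k)) = b k).
    { intros k Hk. destruct (Hth k Hk) as [[K HK] Ck]. rewrite Hp0 in HK.
      set (I0 := Int_part (IZR (k + m) * alpha)).
      assert (Ee : th + IZR (k + m) * alpha = th + e k + IZR I0) by (unfold e, I0, frac_part; ring).
      exists (K - I0)%Z. split.
      - rewrite minus_IZR. rewrite Ee in HK.
        replace (th + e k - (IZR K - IZR I0)) with (th + e k + IZR I0 - 0 - IZR K) by ring. auto.
      - rewrite <- Ha, <- Ck, Ee, frac_plus_int. auto. }
    (* the integers are all equal, since the e k are close to each other *)
    destruct (Hpt k0 ltac:(left; auto)) as [K0 [HK0 _]].
    exists (th - IZR K0). intros k Hk.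
    destruct (Hpt k Hk) as [Kk [HKk Wk]].
    assert (Kk = K0).
    { specialize (Hclose k k0 Hk ltac:(left; auto)).
      apply Rabs_def2 in HK0, HKk, Hclose.
      assert (Rabs (IZR (Kk - K0)) < 1)
        by (rewrite minus_IZR; apply Rabs_def1; unfold rho in *; lra).
      apply int_small in H. lia. }
    subst Kk. apply Rabs_def2 in HKk. unfold rho in HKk. split; [lra|].
    replace (th - IZR K0 + e k) with ((th + e k) + IZR (- K0)) by (rewrite opp_IZR; ring).
    rewrite frac_plus_int. auto.
Qed.

Lemma distinct_points_tame : x0 <> x1 -> tame_pair.
Proof.
  intros Hne.
  assert (Hm : exists m, x0 m <> x1 m).
  { apply NNPP. intros Hn. apply Hne, functional_extensionality. intros m.
    apply NNPP. intros Hm. apply Hn. eauto. }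
  destruct Hm as [m Hm].
  destruct (Req_dec (phase x0) (phase x1)) as [Heq|Hneq]; [|apply distinct_phases_tame; auto].
  destruct (Req_dec (frac_part (phase x0 + IZR m * alpha)) 0).
  - apply (at_zero_tame m); auto.
  - apply (off_zero_tame m); auto.
Qed.

End Pair.

Lemma Xa_tame : tame Xa.
Proof.
  intros [x0 [x1 [H0 [H1 [Hne Hall]]]]].
  destruct (distinct_points_tame x0 x1 H0 H1 Hne) as [Nw HNw].
  destruct (Hall (agree Nw x0) (agree Nw x1)) as [J [HJ HJi]]; [exists Nw; auto| exists Nw; auto|].
  apply (HNw J HJ HJi).
Qed.

Lemma small_multiples : forall n U, 0 < U < 1/2 ->
  exists l, length l = n /\ ratio_chain (fun k => frac_part (IZR k * alpha)) l /\
    forall k, In k l -> U / 64^n <= frac_part (IZR k * alpha) <= U.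
Proof.
  induction n as [|n IH]; intros U HU.
  { exists nil. split; [auto|split; [exact I| intros k []]]. }
  destruct (uniform_density alpha Hirr (U/4) ltac:(lra)) as [N HN].
  destruct (HN (3 * U / 4)) as [i [_ Hi]].
  apply near_interval in Hi; [|lra|lra].
  set (ei := frac_part (IZR i * alpha)) in *.
  destruct (IH (ei / 32) ltac:(lra)) as [l [Hlen [Hch Hb]]].
  assert (H64 : 1 <= 64 ^ n) by (apply pow_R1_Rle; lra).
  exists (i :: l). split; [simpl; auto|]. split.
  - simpl. split; auto. destruct l as [|k' l']; auto. specialize (Hb k' ltac:(left; auto)).
    fold ei. lra.
  - intros k [<-|Hk]; simpl; fold ei.
    + assert (U / (64 * 64 ^ n) <= U / 64)
        by (apply Rmult_le_compat_l; [lra| apply Rinv_le_contravar; nra]). lra.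
    + specialize (Hb k Hk). split; [|lra].
      apply Rle_trans with (ei / 32 / 64 ^ n); [|lra].
      replace (U / (64 * 64 ^ n)) with ((U / 64) / 64 ^ n) by (field; nra).
      unfold Rdiv. apply Rmult_le_compat_r; [left; apply Rinv_0_lt_compat; nra|]. lra.
Qed.

Lemma free_small_times rho n : rho > 0 ->
  exists l, NoDup l /\ length l = n /\ forall b : Z -> bool, exists t, forall k, In k l ->
    exists q K, 0 < q < rho /\ t + IZR k * alpha = q + IZR K /\ code (frac_part q) = b k.
Proof.
  intros Hr.
  assert (H64 : 1 <= 64 ^ n) by (apply pow_R1_Rle; lra).
  set (E := Rmin (rho / 2) (/ (400 * 64 ^ n))).
  assert (HE : 0 < E <= rho / 2 /\ E <= / (400 * 64 ^ n)).
  { unfold E. repeat split; [apply Rmin_pos; [lra| apply Rinv_0_lt_compat; nra]|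
                             apply Rmin_l | apply Rmin_r]. }
  assert (HE4 : / (400 * 64 ^ n) <= / 400) by (apply Rinv_le_contravar; nra).
  assert (HE5 : 200 * E^2 <= E / 64 ^ n).
  { assert (E * (400 * 64 ^ n) <= 1).
    { apply Rmult_le_reg_r with (/ (400 * 64 ^ n)); [apply Rinv_0_lt_compat; nra|].
      rewrite Rmult_assoc, Rinv_r by nra. lra. }
    replace (200 * E^2) with ((200 * E * 64^n) * (E / 64^n)) by (field; nra).
    assert (0 < E / 64 ^ n) by (apply Rdiv_lt_0_compat; lra). nra. }
  set (e := fun k => frac_part (IZR k * alpha)).
  destruct (small_multiples n E ltac:(lra)) as [l [Hlen [Hch Hb]]].
  assert (He : forall k, In k l -> 200 * E^2 <= e k <= E)
    by (intros k Hk; specialize (Hb k Hk); unfold e; lra).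
  exists l. split; [|split; auto].
  { apply (ratio_chain_nodup e); auto. intros x Hx. specialize (He x Hx). nra. }
  intros b. destruct (sweep E e b l ltac:(lra) Hch He) as [t [Ht1 Ht2]].
  exists t. intros k Hk. destruct (Ht2 k Hk) as [Q1 Q2]. specialize (He k Hk).
  exists (t + e k), (Int_part (IZR k * alpha)). split; [|split].
  - assert (E^2 <= E / 400) by nra. lra.
  - unfold e. rewrite (frac_decomp (IZR k * alpha)) at 1. ring.
  - rewrite code_small by lra. auto.
Qed.

Definition with_zero (v : bool) : config :=
  fun n => if Z.eq_dec n 0 then v else itinerary 0 n.

(* The orbit of 0 is regular away from time 0, so a small positive phase q
   has, on a given window, the itinerary of 0 except at time 0. *)
Lemma itinerary_small_phase (N : nat) : exists rho, rho > 0 /\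
  forall q, 0 < q < rho -> agree (Z.of_nat N) (itinerary q) (with_zero (code (frac_part q))).
Proof.
  destruct (finite_min (fun n rho => n <> 0%Z -> forall s, Rabs s < rho ->
       code (frac_part (s + IZR n * alpha)) = itinerary 0 n) N) as [rho [Hr HP]].
  - intros n. destruct (Z.eq_dec n 0) as [->|Hn]; [exists 1; split; [lra|]; contradiction|].
    set (p := frac_part (IZR n * alpha)).
    assert (Hreg : regular_point p) by (apply (regular_multiple _ 1 n); auto; simpl; ring).
    destruct (code_const_regular p (frac_bounds _) Hreg) as [rho [Hr HC]].
    exists rho. split; auto. intros _ s Hs.
    unfold itinerary. rewrite Rplus_0_l. fold p. rewrite <- (HC (p + s)).
    + f_equal. replace (s + IZR n * alpha) with ((p + s) + IZR (Int_part (IZR n * alpha)))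
        by (unfold p, frac_part; ring).
      apply frac_plus_int.
    + replace (p + s - p) with s by ring. auto.
  - intros n r1 r2 Hrr HP0 Hn s Hs. apply HP0; auto. apply Rabs_def2 in Hs. apply Rabs_def1; lra.
  - exists rho. split; auto. intros q Hq n Hn. unfold with_zero, itinerary.
    destruct (Z.eq_dec n 0) as [->|Hn0].
    + replace (q + IZR 0 * alpha) with q by (simpl; ring). auto.
    + apply HP; auto. rewrite Rabs_pos_eq; lra.
Qed.

Lemma Xa_with_zero v : Xa (with_zero v).
Proof.
  intros N. destruct (itinerary_small_phase (Z.to_nat N)) as [rho [Hr Hsm]].
  destruct (free_small_times rho 1 Hr) as [l [_ [Hlen Hb]]].
  destruct (Hb (fun _ => v)) as [t Ht].
  destruct l as [|k l']; [discriminate|].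
  destruct (Ht k ltac:(left; auto)) as [q [K [Hq [_ Wq]]]].
  exists q. intros n Hn. rewrite (Hsm q Hq n ltac:(lia)), Wq. auto.
Qed.

Lemma Xa_not_null : ~ null Xa.
Proof.
  intros Hn. apply Hn.
  exists (with_zero true), (with_zero false).
  split; [apply Xa_with_zero|]. split; [apply Xa_with_zero|]. split.
  { intros E. assert (with_zero true 0%Z = with_zero false 0%Z) by (rewrite E; auto).
    discriminate. }
  intros U0 U1 [N0 HU0] [N1 HU1] n.
  set (N := Z.max 0 (Z.max N0 N1)).
  destruct (itinerary_small_phase (Z.to_nat N)) as [rho [Hr Hsm]].
  destruct (free_small_times rho n Hr) as [l [Hnd [Hlen Hb]]].
  exists l. split; auto. split; [lia|].
  intros I HI a. destruct (Hb (fun k => negb (a k))) as [t Ht].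
  exists (itinerary t). split; [apply Xa_itinerary|].
  intros i Hi. destruct (Ht i (HI i Hi)) as [q [K [Hq [Eq Wq]]]].
  assert (Hag : agree N (with_zero (negb (a i))) (shiftn i (itinerary t))).
  { rewrite shift_itinerary, Eq, itinerary_shift_int, <- Wq.
    apply agree_sym, (agree_mono _ (Z.of_nat (Z.to_nat N))); [lia|]. auto. }
  destruct (a i); [apply HU1 | apply HU0]; try apply Xa_shift, Xa_itinerary;
    apply (agree_mono _ N); auto; unfold N; lia.
Qed.

End Extension.

Theorem mainTheorem16 (alpha : R) (Halpha : irrational alpha) :
  exists (X : config -> Prop) (pi : config -> R),
    subshift X /\ factor_map_onto_rotation X alpha pi /\
    almost_one_to_one X pi /\ tame X /\ ~ null X.
Proof.
  exists (Xa alpha), (phase alpha).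
  split; [apply Xa_subshift|].
  split; [apply phase_factor; auto|].
  split; [apply phase_almost_one_to_one; auto|].
  split; [apply Xa_tame | apply Xa_not_null]; auto.
Qed.
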